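(* For each $\Sigma^B_0$-formula $\varphi(\bar x)$ of $\mathcal L_{\mathsf{LAP}}$ there is an $\mathcal L_{\mathsf{LAP}}$-term $\delta_\varphi(\bar x)$ of field sort such that $\mathsf{LAP}\vdash\varphi(\bar x)\rightarrow\delta_\varphi(\bar x)=1$ and $\mathsf{LAP}\vdash\neg\varphi(\bar x)\rightarrow\delta_\varphi(\bar x)=0$. In particular $\mathsf{LAP}\vdash\varphi(\bar x)\leftrightarrow\delta_\varphi(\bar x)=1$, so every $\Sigma^B_0$-formula is $\mathsf{LAP}$-provably equivalent to an open formula.
   Context: $\mathsf{LAP}$ is a three-sorted first-order theory (sorts index, field, matrix) in language $\mathcal L_{\mathsf{LAP}}$: index sort with $0,1,+,*,\dot-,\mathrm{div},\mathrm{rem},\le,=$; field sort with $0,1,+,*,-,(\cdot)^{-1},=$; matrix functions $\mathrm r(A),\mathrm c(A)$ (rows, columns), $\mathrm e(A,i,j)$ (entries), $\Sigma(A)$ (sum of entries), $\mathrm P(k,A)$ (powers), matrix equality; plus iteratively added conditional function symbols (index- or field-valued, selecting between two arguments by an open formula in index variables) and $\lambda$-terms $\lambda ij\langle m,n,t\rangle$. Axioms: equality axioms, open induction on the index sort, index sort the nonnegative part of a discretely ordered ring with modified subtraction and division with remainder, the field sort a field with $aa^{-1}=1$ for $a\neq0$, defining axioms of conditionals and $\lambda$-terms, entries zero outside the index range, matrix extensionality, recursive definition of $\Sigma$, and $\mathrm P(0,A)=I$, $\mathrm P(k+1,A)=\mathrm P(k,A)A$ for square $A$. A formula of $\mathcal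 L_{\mathsf{LAP}}$ is $\Sigma^B_0$ if all its quantifiers are over the index sort and bounded by terms. *)

(* Variables are de Bruijn indices, one index space per
   sort (index / field / matrix). *)
From Stdlib Require Import Bool.

Inductive iterm : Type :=
| IVar   : nat -> iterm
| IZero  : iterm
| IOne   : iterm
| IAdd   : iterm -> iterm -> iterm
| IMul   : iterm -> iterm -> iterm
| IMonus : iterm -> iterm -> iterm
| IDiv   : iterm -> iterm -> iterm
| IRem   : iterm -> iterm -> iterm
| IRows  : mterm -> iterm
| ICols  : mterm -> iterm
| ICond  : iform -> iterm -> iterm -> iterm
with fterm : Type :=
| FVar   : nat -> fterm
| FZero  : fterm
| FOne   : fterm
| FAdd   : fterm -> fterm -> fterm
| FMul   : fterm -> fterm -> fterm
| FOpp   : fterm -> fterm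
| FInv   : fterm -> fterm
| FEntry : mterm -> iterm -> iterm -> fterm
| FSum   : mterm -> fterm
| FCond  : iform -> fterm -> fterm -> fterm
with mterm : Type :=
| MVar   : nat -> mterm
| MPow   : iterm -> mterm -> mterm
| MLam   : iterm -> iterm -> fterm -> mterm
  (* MLam m n t = lambda i j <m,n,t>; in t, index variable 1 is i and
     index variable 0 is j (both bound). *)
with iform : Type :=
| QLe  : iterm -> iterm -> iform
| QEq  : iterm -> iterm -> iform
| QNot : iform -> iform
| QAnd : iform -> iform -> iform
| QOr  : iform -> iform -> iform.

Inductive form : Type :=
| Le   : iterm -> iterm -> form
| EqI  : iterm -> iterm -> form
| EqF  : fterm -> fterm -> form
| EqM  : mterm -> mterm -> form
| Not  : form -> form
| And  : form -> form -> form
| Or   : form -> form -> form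
| Imp  : form -> form -> form
| AllI : form -> form
| AllF : form -> form
| AllM : form -> form.

Definition Iff (p q : form) : form := And (Imp p q) (Imp q p).
Definition Lt (s t : iterm) : form := And (Le s t) (Not (EqI s t)).

Fixpoint of_iform (a : iform) : form :=
  match a with
  | QLe s t => Le s t
  | QEq s t => EqI s t
  | QNot p => Not (of_iform p)
  | QAnd p q => And (of_iform p) (of_iform q)
  | QOr p q => Or (of_iform p) (of_iform q)
  end.

Record ren := Ren { rI : nat -> nat; rF : nat -> nat; rM : nat -> nat }.

Definition up0 (f : nat -> nat) (n : nat) : nat :=
  match n with 0 => 0 | S k => S (f k) end.

Definition uprI (x : ren) := Ren (up0 (rI x)) (rF x) (rM x).
Definition uprF (x : ren) := Ren (rI x) (up0 (rF x)) (rM x).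
Definition uprM (x : ren) := Ren (rI x) (rF x) (up0 (rM x)).

Fixpoint ren_i (x : ren) (t : iterm) : iterm :=
  match t with
  | IVar n => IVar (rI x n)
  | IZero => IZero
  | IOne => IOne
  | IAdd a b => IAdd (ren_i x a) (ren_i x b)
  | IMul a b => IMul (ren_i x a) (ren_i x b)
  | IMonus a b => IMonus (ren_i x a) (ren_i x b)
  | IDiv a b => IDiv (ren_i x a) (ren_i x b)
  | IRem a b => IRem (ren_i x a) (ren_i x b)
  | IRows A => IRows (ren_m x A)
  | ICols A => ICols (ren_m x A)
  | ICond q a b => ICond (ren_q x q) (ren_i x a) (ren_i x b)
  end
with ren_f (x : ren) (t : fterm) : fterm :=
  match t with
  | FVar n => FVar (rF x n)
  | FZero => FZero
  | FOne => FOne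
  | FAdd a b => FAdd (ren_f x a) (ren_f x b)
  | FMul a b => FMul (ren_f x a) (ren_f x b)
  | FOpp a => FOpp (ren_f x a)
  | FInv a => FInv (ren_f x a)
  | FEntry A i j => FEntry (ren_m x A) (ren_i x i) (ren_i x j)
  | FSum A => FSum (ren_m x A)
  | FCond q a b => FCond (ren_q x q) (ren_f x a) (ren_f x b)
  end
with ren_m (x : ren) (A : mterm) : mterm :=
  match A with
  | MVar n => MVar (rM x n)
  | MPow k B => MPow (ren_i x k) (ren_m x B)
  | MLam m n t => MLam (ren_i x m) (ren_i x n) (ren_f (uprI (uprI x)) t)
  end
with ren_q (x : ren) (q : iform) : iform :=
  match q with
  | QLe a b => QLe (ren_i x a) (ren_i x b)
  | QEq a b => QEq (ren_i x a) (ren_i x b)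
  | QNot p => QNot (ren_q x p)
  | QAnd p r => QAnd (ren_q x p) (ren_q x r)
  | QOr p r => QOr (ren_q x p) (ren_q x r)
  end.

Definition shI : ren := Ren S (fun n => n) (fun n => n).
Definition shF : ren := Ren (fun n => n) S (fun n => n).
Definition shM : ren := Ren (fun n => n) (fun n => n) S.

Record sub := Sub { sI : nat -> iterm; sF : nat -> fterm; sM : nat -> mterm }.

Definition upsI (s : sub) : sub :=
  Sub (fun n => match n with 0 => IVar 0 | S k => ren_i shI (sI s k) end)
      (fun n => ren_f shI (sF s n)) (fun n => ren_m shI (sM s n)).
Definition upsF (s : sub) : sub :=
  Sub (fun n => ren_i shF (sI s n))
      (fun n => match n with 0 => FVar 0 | S k => ren_f shF (sF s k) end)
      (fun n => ren_m shF (sM s n)).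
Definition upsM (s : sub) : sub :=
  Sub (fun n => ren_i shM (sI s n)) (fun n => ren_f shM (sF s n))
      (fun n => match n with 0 => MVar 0 | S k => ren_m shM (sM s k) end).

Fixpoint sub_i (s : sub) (t : iterm) : iterm :=
  match t with
  | IVar n => sI s n
  | IZero => IZero
  | IOne => IOne
  | IAdd a b => IAdd (sub_i s a) (sub_i s b)
  | IMul a b => IMul (sub_i s a) (sub_i s b)
  | IMonus a b => IMonus (sub_i s a) (sub_i s b)
  | IDiv a b => IDiv (sub_i s a) (sub_i s b)
  | IRem a b => IRem (sub_i s a) (sub_i s b)
  | IRows A => IRows (sub_m s A)
  | ICols A => ICols (sub_m s A)
  | ICond q a b => ICond (sub_q s q) (sub_i s a) (sub_i s b)
  end
with sub_f (s : sub) (t : fterm) : fterm :=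
  match t with
  | FVar n => sF s n
  | FZero => FZero
  | FOne => FOne
  | FAdd a b => FAdd (sub_f s a) (sub_f s b)
  | FMul a b => FMul (sub_f s a) (sub_f s b)
  | FOpp a => FOpp (sub_f s a)
  | FInv a => FInv (sub_f s a)
  | FEntry A i j => FEntry (sub_m s A) (sub_i s i) (sub_i s j)
  | FSum A => FSum (sub_m s A)
  | FCond q a b => FCond (sub_q s q) (sub_f s a) (sub_f s b)
  end
with sub_m (s : sub) (A : mterm) : mterm :=
  match A with
  | MVar n => sM s n
  | MPow k B => MPow (sub_i s k) (sub_m s B)
  | MLam m n t => MLam (sub_i s m) (sub_i s n) (sub_f (upsI (upsI s)) t)
  end
with sub_q (s : sub) (q : iform) : iform :=
  match q with
  | QLe a b => QLe (sub_i s a) (sub_i s b)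
  | QEq a b => QEq (sub_i s a) (sub_i s b)
  | QNot p => QNot (sub_q s p)
  | QAnd p r => QAnd (sub_q s p) (sub_q s r)
  | QOr p r => QOr (sub_q s p) (sub_q s r)
  end.

Fixpoint ren_form (x : ren) (p : form) : form :=
  match p with
  | Le a b => Le (ren_i x a) (ren_i x b)
  | EqI a b => EqI (ren_i x a) (ren_i x b)
  | EqF a b => EqF (ren_f x a) (ren_f x b)
  | EqM a b => EqM (ren_m x a) (ren_m x b)
  | Not q => Not (ren_form x q)
  | And q r => And (ren_form x q) (ren_form x r)
  | Or q r => Or (ren_form x q) (ren_form x r)
  | Imp q r => Imp (ren_form x q) (ren_form x r)
  | AllI q => AllI (ren_form (uprI x) q)
  | AllF q => AllF (ren_form (uprF x) q)
  | AllM q => AllM (ren_form (uprM x) q)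
  end.

Fixpoint sub_form (s : sub) (p : form) : form :=
  match p with
  | Le a b => Le (sub_i s a) (sub_i s b)
  | EqI a b => EqI (sub_i s a) (sub_i s b)
  | EqF a b => EqF (sub_f s a) (sub_f s b)
  | EqM a b => EqM (sub_m s a) (sub_m s b)
  | Not q => Not (sub_form s q)
  | And q r => And (sub_form s q) (sub_form s r)
  | Or q r => Or (sub_form s q) (sub_form s r)
  | Imp q r => Imp (sub_form s q) (sub_form s r)
  | AllI q => AllI (sub_form (upsI s) q)
  | AllF q => AllF (sub_form (upsF s) q)
  | AllM q => AllM (sub_form (upsM s) q)
  end.

Definition instI (t : iterm) : sub :=
  Sub (fun n => match n with 0 => t | S k => IVar k end) FVar MVar.
Definition instF (t : fterm) : sub :=
  Sub IVar (fun n => match n with 0 => t | S k => FVar k end) MVar.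
Definition instM (t : mterm) : sub :=
  Sub IVar FVar (fun n => match n with 0 => t | S k => MVar k end).
Definition succ0 : sub :=
  Sub (fun n => match n with 0 => IAdd (IVar 0) IOne | S k => IVar (S k) end)
      FVar MVar.
Definition inst2 (i j : iterm) : sub :=
  Sub (fun n => match n with 0 => j | 1 => i | S (S k) => IVar k end)
      FVar MVar.

Inductive srt := SI | SF | SM.

Definition bump (b s : srt) (n : nat) : nat :=
  match b, s with
  | SI, SI | SF, SF | SM, SM => S n
  | _, _ => n
  end.

Fixpoint occ_i (s : srt) (n : nat) (t : iterm) : bool :=
  match t with
  | IVar k => match s with SI => Nat.eqb k n | _ => false end
  | IZero | IOne => false
  | IAdd a b | IMul a b | IMonus a b | IDiv a b | IRem a b =>
      occ_i s n a || occ_i s n b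
  | IRows A | ICols A => occ_m s n A
  | ICond q a b => occ_q s n q || occ_i s n a || occ_i s n b
  end
with occ_f (s : srt) (n : nat) (t : fterm) : bool :=
  match t with
  | FVar k => match s with SF => Nat.eqb k n | _ => false end
  | FZero | FOne => false
  | FAdd a b | FMul a b => occ_f s n a || occ_f s n b
  | FOpp a | FInv a => occ_f s n a
  | FEntry A i j => occ_m s n A || occ_i s n i || occ_i s n j
  | FSum A => occ_m s n A
  | FCond q a b => occ_q s n q || occ_f s n a || occ_f s n b
  end
with occ_m (s : srt) (n : nat) (A : mterm) : bool :=
  match A with
  | MVar k => match s with SM => Nat.eqb k n | _ => false end
  | MPow k B => occ_i s n k || occ_m s n B
  | MLam m k t => occ_i s n m || occ_i s n k || occ_f s (bump SI s (bump SI s n)) t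
  end
with occ_q (s : srt) (n : nat) (q : iform) : bool :=
  match q with
  | QLe a b | QEq a b => occ_i s n a || occ_i s n b
  | QNot p => occ_q s n p
  | QAnd p r | QOr p r => occ_q s n p || occ_q s n r
  end.

Fixpoint occ_form (s : srt) (n : nat) (p : form) : bool :=
  match p with
  | Le a b | EqI a b => occ_i s n a || occ_i s n b
  | EqF a b => occ_f s n a || occ_f s n b
  | EqM a b => occ_m s n a || occ_m s n b
  | Not q => occ_form s n q
  | And q r | Or q r | Imp q r => occ_form s n q || occ_form s n r
  | AllI q => occ_form s (bump SI s n) q
  | AllF q => occ_form s (bump SF s n) q
  | AllM q => occ_form s (bump SM s n) q
  end.

Fixpoint is_open (p : form) : bool :=
  match p with
  | Le _ _ | EqI _ _ | EqF _ _ | EqM _ _ => true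
  | Not q => is_open q
  | And q r | Or q r | Imp q r => is_open q && is_open r
  | AllI _ | AllF _ | AllM _ => false
  end.

(* bounded index quantifier  (forall i <= t) p ;  t is written in the outer
   context (so i does not occur in t), p has i as index variable 0 *)
Definition AllLe (t : iterm) (p : form) : form :=
  AllI (Imp (Le (IVar 0) (ren_i shI t)) p).
Definition ExLe (t : iterm) (p : form) : form :=
  Not (AllLe t (Not p)).

Inductive SigmaB0 : form -> Prop :=
| SB_Le  : forall a b, SigmaB0 (Le a b)
| SB_EqI : forall a b, SigmaB0 (EqI a b)
| SB_EqF : forall a b, SigmaB0 (EqF a b)
| SB_EqM : forall a b, SigmaB0 (EqM a b)
| SB_Not : forall p, SigmaB0 p -> SigmaB0 (Not p)
| SB_And : forall p q, SigmaB0 p -> SigmaB0 q -> SigmaB0 (And p q)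
| SB_Or  : forall p q, SigmaB0 p -> SigmaB0 q -> SigmaB0 (Or p q)
| SB_Imp : forall p q, SigmaB0 p -> SigmaB0 q -> SigmaB0 (Imp p q)
| SB_AllLe : forall t p, SigmaB0 p -> SigmaB0 (AllLe t p)
| SB_ExLe  : forall t p, SigmaB0 p -> SigmaB0 (ExLe t p).

Definition sh2i (t : iterm) := ren_i shI (ren_i shI t).
Definition sh2m (A : mterm) := ren_m shI (ren_m shI A).
Definition i2 : iterm := IVar 1.
Definition j2 : iterm := IVar 0.
Definition ITwo := IAdd IOne IOne.

Definition MId (n : iterm) : mterm :=
  MLam n n (FCond (QEq i2 j2) FOne FZero).
Definition MTr (A : mterm) : mterm :=
  MLam (ICols A) (IRows A) (FEntry (sh2m A) j2 i2).
(* matrix product:  (A*B)_{ij} = Sigma( lambda p q <c(A),1, e(A,i,p) e(B,p,j)> ) *)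
Definition MMul (A B : mterm) : mterm :=
  MLam (IRows A) (ICols B)
    (FSum (MLam (ICols (sh2m A)) IOne
       (FMul (FEntry (sh2m (sh2m A)) (IVar 3) (IVar 1))
             (FEntry (sh2m (sh2m B)) (IVar 1) (IVar 2))))).
(* first row without its first entry, first column without its first entry,
   and the minor obtained by deleting the first row and column *)
Definition MR (A : mterm) : mterm :=
  MLam IOne (IMonus (ICols A) IOne) (FEntry (sh2m A) IOne (IAdd j2 IOne)).
Definition MS (A : mterm) : mterm :=
  MLam (IMonus (IRows A) IOne) IOne (FEntry (sh2m A) (IAdd i2 IOne) IOne).
Definition MM (A : mterm) : mterm :=
  MLam (IMonus (IRows A) IOne) (IMonus (ICols A) IOne)
       (FEntry (sh2m A) (IAdd i2 IOne) (IAdd j2 IOne)).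

Inductive LAPax : form -> Prop :=
(* index sort: nonnegative part of a discretely ordered ring *)
| AxIAddC : forall s t, LAPax (EqI (IAdd s t) (IAdd t s))
| AxIAddA : forall s t u, LAPax (EqI (IAdd (IAdd s t) u) (IAdd s (IAdd t u)))
| AxIAdd0 : forall s, LAPax (EqI (IAdd s IZero) s)
| AxIMulC : forall s t, LAPax (EqI (IMul s t) (IMul t s))
| AxIMulA : forall s t u, LAPax (EqI (IMul (IMul s t) u) (IMul s (IMul t u)))
| AxIMul1 : forall s, LAPax (EqI (IMul s IOne) s)
| AxIMul0 : forall s, LAPax (EqI (IMul s IZero) IZero)
| AxIDist : forall s t u, LAPax (EqI (IMul s (IAdd t u)) (IAdd (IMul s t) (IMul s u)))
| AxLeRefl : forall s, LAPax (Le s s)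
| AxLeTrans : forall s t u, LAPax (Imp (And (Le s t) (Le t u)) (Le s u))
| AxLeAnti : forall s t, LAPax (Imp (And (Le s t) (Le t s)) (EqI s t))
| AxLeTotal : forall s t, LAPax (Or (Le s t) (Le t s))
| AxLeAdd : forall s t u, LAPax (Imp (Lt s t) (Lt (IAdd s u) (IAdd t u)))
| AxLeMul : forall s t u,
    LAPax (Imp (And (Lt s t) (Lt IZero u)) (Lt (IMul s u) (IMul t u)))
| AxLe0 : forall s, LAPax (Le IZero s)
| AxZeroLtOne : LAPax (Lt IZero IOne)
| AxDiscr : forall s t, LAPax (Imp (Lt s t) (Le (IAdd s IOne) t))
| AxMonus1 : forall s t, LAPax (Imp (Le s t) (EqI (IAdd (IMonus t s) s) t))
| AxMonus2 : forall s t, LAPax (Imp (Le t s) (EqI (IMonus t s) IZero))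
| AxDivRem : forall s t,
    LAPax (Imp (Not (EqI t IZero))
             (And (EqI s (IAdd (IMul t (IDiv s t)) (IRem s t)))
                  (Lt (IRem s t) t)))
(* open induction on the index sort (induction variable = index var 0) *)
| AxInd : forall p, is_open p = true ->
    LAPax (Imp (And (sub_form (instI IZero) p)
                    (AllI (Imp p (sub_form succ0 p))))
               (AllI p))
| AxFAddC : forall a b, LAPax (EqF (FAdd a b) (FAdd b a))
| AxFAddA : forall a b c, LAPax (EqF (FAdd (FAdd a b) c) (FAdd a (FAdd b c)))
| AxFAdd0 : forall a, LAPax (EqF (FAdd a FZero) a)
| AxFOpp  : forall a, LAPax (EqF (FAdd a (FOpp a)) FZero)
| AxFMulC : forall a b, LAPax (EqF (FMul a b) (FMul b a))
| AxFMulA : forall a b c, LAPax (EqF (FMul (FMul a b) c) (FMul a (FMul b c)))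
| AxFMul1 : forall a, LAPax (EqF (FMul a FOne) a)
| AxFDist : forall a b c, LAPax (EqF (FMul a (FAdd b c)) (FAdd (FMul a b) (FMul a c)))
| AxF01 : LAPax (Not (EqF FZero FOne))
| AxFInv : forall a, LAPax (Imp (Not (EqF a FZero)) (EqF (FMul a (FInv a)) FOne))
| AxICond1 : forall q s t, LAPax (Imp (of_iform q) (EqI (ICond q s t) s))
| AxICond2 : forall q s t, LAPax (Imp (Not (of_iform q)) (EqI (ICond q s t) t))
| AxFCond1 : forall q a b, LAPax (Imp (of_iform q) (EqF (FCond q a b) a))
| AxFCond2 : forall q a b, LAPax (Imp (Not (of_iform q)) (EqF (FCond q a b) b))
| AxLamR : forall m n t, LAPax (EqI (IRows (MLam m n t)) m)
| AxLamC : forall m n t, LAPax (EqI (ICols (MLam m n t)) n)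
| AxLamE : forall m n t i j,
    LAPax (Imp (And (And (Le IOne i) (Le i m)) (And (Le IOne j) (Le j n)))
               (EqF (FEntry (MLam m n t) i j) (sub_f (inst2 i j) t)))
| AxEntry0 : forall A i j,
    LAPax (Imp (Or (Or (EqI i IZero) (Lt (IRows A) i))
                   (Or (EqI j IZero) (Lt (ICols A) j)))
               (EqF (FEntry A i j) FZero))
| AxExt : forall A B,
    LAPax (Imp (And (And (EqI (IRows A) (IRows B)) (EqI (ICols A) (ICols B)))
                    (AllLe (IRows A) (AllLe (ren_i shI (ICols A))
                       (EqF (FEntry (sh2m A) i2 j2) (FEntry (sh2m B) i2 j2)))))
               (EqM A B))
| AxSum0 : forall A,
    LAPax (Imp (Or (EqI (IRows A) IZero) (EqI (ICols A) IZero)) (EqF (FSum A) FZero))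
| AxSum1 : forall A,
    LAPax (Imp (And (EqI (IRows A) IOne) (EqI (ICols A) IOne))
               (EqF (FSum A) (FEntry A IOne IOne)))
| AxSumRow : forall A,
    LAPax (Imp (And (EqI (IRows A) IOne) (Lt IOne (ICols A)))
               (EqF (FSum A)
                    (FAdd (FSum (MLam IOne (IMonus (ICols A) IOne)
                                      (FEntry (sh2m A) i2 j2)))
                          (FEntry A IOne (ICols A)))))
| AxSumCol : forall A,
    LAPax (Imp (EqI (ICols A) IOne) (EqF (FSum A) (FSum (MTr A))))
| AxSumRec : forall A,
    LAPax (Imp (And (Lt IOne (IRows A)) (Lt IOne (ICols A)))
               (EqF (FSum A)
                    (FAdd (FAdd (FAdd (FEntry A IOne IOne) (FSum (MR A)))
                                (FSum (MS A)))
                          (FSum (MM A)))))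
| AxPow0 : forall A,
    LAPax (Imp (EqI (IRows A) (ICols A)) (EqM (MPow IZero A) (MId (IRows A))))
| AxPowS : forall k A,
    LAPax (Imp (EqI (IRows A) (ICols A))
               (EqM (MPow (IAdd k IOne) A) (MMul (MPow k A) A))).

(* truth value of a formula under an assignment of booleans to its
   prime (atomic or universally quantified) subformulas *)
Fixpoint tv (v : form -> bool) (p : form) : bool :=
  match p with
  | Not q => negb (tv v q)
  | And q r => tv v q && tv v r
  | Or q r => tv v q || tv v r
  | Imp q r => implb (tv v q) (tv v r)
  | _ => v p
  end.

Definition tautology (p : form) : Prop := forall v, tv v p = true.

Inductive LAP_proves : form -> Prop :=
| Pr_ax : forall p, LAPax p -> LAP_proves p
| Pr_taut : forall p, tautology p -> LAP_proves p
| Pr_mp : forall p q, LAP_proves (Imp p q) -> LAP_proves p -> LAP_proves q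
| Pr_instI : forall p t, LAP_proves (Imp (AllI p) (sub_form (instI t) p))
| Pr_instF : forall p t, LAP_proves (Imp (AllF p) (sub_form (instF t) p))
| Pr_instM : forall p t, LAP_proves (Imp (AllM p) (sub_form (instM t) p))
(* generalization: from  q -> p  with x not free in q, infer  q -> forall x p *)
| Pr_genI : forall q p, LAP_proves (Imp (ren_form shI q) p) -> LAP_proves (Imp q (AllI p))
| Pr_genF : forall q p, LAP_proves (Imp (ren_form shF q) p) -> LAP_proves (Imp q (AllF p))
| Pr_genM : forall q p, LAP_proves (Imp (ren_form shM q) p) -> LAP_proves (Imp q (AllM p))
| Pr_reflI : forall t, LAP_proves (EqI t t)
| Pr_reflF : forall t, LAP_proves (EqF t t)
| Pr_reflM : forall t, LAP_proves (EqM t t)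
| Pr_leibI : forall s t p,
    LAP_proves (Imp (EqI s t) (Imp (sub_form (instI s) p) (sub_form (instI t) p)))
| Pr_leibF : forall s t p,
    LAP_proves (Imp (EqF s t) (Imp (sub_form (instF s) p) (sub_form (instF t) p)))
| Pr_leibM : forall s t p,
    LAP_proves (Imp (EqM s t) (Imp (sub_form (instM s) p) (sub_form (instM t) p))).

Definition fv_sub (d : fterm) (p : form) : Prop :=
  forall s n, occ_f s n d = true -> occ_form s n p = true.

(* A bounded universal quantifier [forall i <= t, phi(i)] is captured by the product
   [delta(0) ... delta(t)] of the characteristic terms of its instances, and LAP expresses this
   product by matrix powering: in the [(t+2) x (t+2)] matrix with [delta(i-1)] at position
   [(i, i+1)] and zeros elsewhere, entry [(1, k+1)] of the [k]-th power is
   [delta(0) ... delta(k-1)], since the entry of a product with this matrix is a sum with a single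
   nonzero term. Open induction on [k] shows that the entry is [1] when every instance holds and [0]
   as soon as one fails. Index atoms are decided by conditional terms, a field equation [a = b] by
   [1 - u u^-1] with [u = a - b], a matrix equation by extensionality (which turns it into bounded
   quantifiers over the entries), and the connectives by arithmetic on [{0, 1}]. *)

From Stdlib Require Import Bool PeanoNat FunctionalExtensionality.

Scheme iterm_mut := Induction for iterm Sort Prop
with fterm_mut := Induction for fterm Sort Prop
with mterm_mut := Induction for mterm Sort Prop
with iform_mut := Induction for iform Sort Prop.
Combined Scheme term_mut from iterm_mut, fterm_mut, mterm_mut, iform_mut.

Definition ren_comp (x y : ren) : ren :=
  Ren (fun n => rI y (rI x n)) (fun n => rF y (rF x n)) (fun n => rM y (rM x n)).
Definition ren_sub_comp (x : ren) (s : sub) : sub :=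
  Sub (fun n => sI s (rI x n)) (fun n => sF s (rF x n)) (fun n => sM s (rM x n)).
Definition sub_ren_comp (s : sub) (x : ren) : sub :=
  Sub (fun n => ren_i x (sI s n)) (fun n => ren_f x (sF s n)) (fun n => ren_m x (sM s n)).
Definition sub_comp (s t : sub) : sub :=
  Sub (fun n => sub_i t (sI s n)) (fun n => sub_f t (sF s n)) (fun n => sub_m t (sM s n)).
Definition sub_id : sub := Sub IVar FVar MVar.
Definition sub_of_ren (x : ren) : sub :=
  Sub (fun n => IVar (rI x n)) (fun n => FVar (rF x n)) (fun n => MVar (rM x n)).

Ltac rewrite_IHs :=
  intros; simpl; try reflexivity;
  repeat match goal with H : _ |- _ => rewrite H; clear H end;
  try reflexivity.

Lemma ren_comp_uprI x y : ren_comp (uprI x) (uprI y) = uprI (ren_comp x y).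
Proof.
  unfold ren_comp, uprI; simpl; do 2 f_equal; apply functional_extensionality; now intros [].
Qed.

Lemma ren_ren_terms :
  (forall t x y, ren_i y (ren_i x t) = ren_i (ren_comp x y) t) /\
  (forall t x y, ren_f y (ren_f x t) = ren_f (ren_comp x y) t) /\
  (forall t x y, ren_m y (ren_m x t) = ren_m (ren_comp x y) t) /\
  (forall t x y, ren_q y (ren_q x t) = ren_q (ren_comp x y) t).
Proof. apply term_mut; rewrite_IHs; now rewrite !ren_comp_uprI. Qed.

Ltac unfold_subs :=
  unfold ren_comp, ren_sub_comp, sub_ren_comp, sub_comp, sub_id, sub_of_ren,
    upsI, upsF, upsM, uprI, uprF, uprM, instI, instF, instM, inst2, succ0, shI, shF, shM.

Ltac up_ext :=
  unfold_subs; simpl; f_equal; apply functional_extensionality; intros [|[|n]]; reflexivity.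

Lemma ren_sub_comp_upI x s : ren_sub_comp (uprI x) (upsI s) = upsI (ren_sub_comp x s).
Proof. up_ext. Qed.
Lemma ren_sub_comp_upF x s : ren_sub_comp (uprF x) (upsF s) = upsF (ren_sub_comp x s).
Proof. up_ext. Qed.
Lemma ren_sub_comp_upM x s : ren_sub_comp (uprM x) (upsM s) = upsM (ren_sub_comp x s).
Proof. up_ext. Qed.

Lemma sub_ren_terms :
  (forall t x s, sub_i s (ren_i x t) = sub_i (ren_sub_comp x s) t) /\
  (forall t x s, sub_f s (ren_f x t) = sub_f (ren_sub_comp x s) t) /\
  (forall t x s, sub_m s (ren_m x t) = sub_m (ren_sub_comp x s) t) /\
  (forall t x s, sub_q s (ren_q x t) = sub_q (ren_sub_comp x s) t).
Proof. apply term_mut; rewrite_IHs; now rewrite !ren_sub_comp_upI. Qed.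

Lemma sub_ren_i x s u : sub_i s (ren_i x u) = sub_i (ren_sub_comp x s) u.
Proof. apply sub_ren_terms. Qed.
Lemma sub_ren_f x s u : sub_f s (ren_f x u) = sub_f (ren_sub_comp x s) u.
Proof. apply sub_ren_terms. Qed.
Lemma sub_ren_m x s u : sub_m s (ren_m x u) = sub_m (ren_sub_comp x s) u.
Proof. apply sub_ren_terms. Qed.

Lemma sub_ren_form p x s : sub_form s (ren_form x p) = sub_form (ren_sub_comp x s) p.
Proof.
  revert x s; induction p; intros; simpl;
    rewrite ?sub_ren_i, ?sub_ren_f, ?sub_ren_m, ?IHp, ?IHp1, ?IHp2;
    rewrite ?ren_sub_comp_upI, ?ren_sub_comp_upF, ?ren_sub_comp_upM; reflexivity.
Qed.

Lemma sub_ren_comp_upI s x : sub_ren_comp (upsI s) (uprI x) = upsI (sub_ren_comp s x).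
Proof.
  destruct ren_ren_terms as (Hi & Hf & Hm & _).
  unfold_subs; simpl; f_equal; apply functional_extensionality; intros [|n]; simpl;
    rewrite ?Hi, ?Hf, ?Hm; reflexivity.
Qed.

Lemma ren_sub_terms :
  (forall t s x, ren_i x (sub_i s t) = sub_i (sub_ren_comp s x) t) /\
  (forall t s x, ren_f x (sub_f s t) = sub_f (sub_ren_comp s x) t) /\
  (forall t s x, ren_m x (sub_m s t) = sub_m (sub_ren_comp s x) t) /\
  (forall t s x, ren_q x (sub_q s t) = sub_q (sub_ren_comp s x) t).
Proof. apply term_mut; rewrite_IHs; now rewrite !sub_ren_comp_upI. Qed.

Lemma sub_comp_upI s t : sub_comp (upsI s) (upsI t) = upsI (sub_comp s t).
Proof.
  destruct ren_sub_terms as (Hi & Hf & Hm & _).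
  unfold_subs; simpl; f_equal; apply functional_extensionality; intros [|n]; simpl;
    rewrite ?Hi, ?Hf, ?Hm, ?sub_ren_i, ?sub_ren_f, ?sub_ren_m; reflexivity.
Qed.

Lemma sub_sub_terms :
  (forall u s t, sub_i t (sub_i s u) = sub_i (sub_comp s t) u) /\
  (forall u s t, sub_f t (sub_f s u) = sub_f (sub_comp s t) u) /\
  (forall u s t, sub_m t (sub_m s u) = sub_m (sub_comp s t) u) /\
  (forall u s t, sub_q t (sub_q s u) = sub_q (sub_comp s t) u).
Proof. apply term_mut; rewrite_IHs; now rewrite !sub_comp_upI. Qed.

Lemma sub_sub_i s t u : sub_i t (sub_i s u) = sub_i (sub_comp s t) u.
Proof. apply sub_sub_terms. Qed.
Lemma sub_sub_f s t u : sub_f t (sub_f s u) = sub_f (sub_comp s t) u.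
Proof. apply sub_sub_terms. Qed.
Lemma sub_sub_m s t u : sub_m t (sub_m s u) = sub_m (sub_comp s t) u.
Proof. apply sub_sub_terms. Qed.

Lemma upsI_id : upsI sub_id = sub_id.
Proof. up_ext. Qed.
Lemma upsF_id : upsF sub_id = sub_id.
Proof. up_ext. Qed.
Lemma upsM_id : upsM sub_id = sub_id.
Proof. up_ext. Qed.

Lemma sub_id_terms :
  (forall u, sub_i sub_id u = u) /\ (forall u, sub_f sub_id u = u) /\
  (forall u, sub_m sub_id u = u) /\ (forall u, sub_q sub_id u = u).
Proof. apply term_mut; rewrite_IHs; rewrite !upsI_id; rewrite_IHs. Qed.

Lemma sub_id_form p : sub_form sub_id p = p.
Proof.
  destruct sub_id_terms as (Hi & Hf & Hm & _).
  induction p; simpl; rewrite ?Hi, ?Hf, ?Hm, ?upsI_id, ?upsF_id, ?upsM_id, ?IHp, ?IHp1, ?IHp2;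
    reflexivity.
Qed.

Lemma ren_as_sub_terms :
  (forall u x, ren_i x u = sub_i (sub_of_ren x) u) /\
  (forall u x, ren_f x u = sub_f (sub_of_ren x) u) /\
  (forall u x, ren_m x u = sub_m (sub_of_ren x) u) /\
  (forall u x, ren_q x u = sub_q (sub_of_ren x) u).
Proof.
  apply term_mut; rewrite_IHs.
  do 2 f_equal; unfold_subs; simpl; f_equal; apply functional_extensionality; now intros [|[|n]].
Qed.

Lemma ren_as_sub_i x u : ren_i x u = sub_i (sub_of_ren x) u.
Proof. apply ren_as_sub_terms. Qed.
Lemma ren_as_sub_f x u : ren_f x u = sub_f (sub_of_ren x) u.
Proof. apply ren_as_sub_terms. Qed.
Lemma ren_as_sub_m x u : ren_m x u = sub_m (sub_of_ren x) u.
Proof. apply ren_as_sub_terms. Qed.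

Ltac subst_eq :=
  rewrite ?ren_as_sub_i, ?ren_as_sub_f, ?ren_as_sub_m;
  rewrite ?sub_sub_i, ?sub_sub_f, ?sub_sub_m;
  f_equal; unfold_subs; simpl; f_equal; apply functional_extensionality;
  intros [|[|[|[|n]]]]; reflexivity.

Lemma sub_instI_shI_i s u : sub_i (instI s) (ren_i shI u) = u.
Proof. rewrite sub_ren_i; apply sub_id_terms. Qed.
Lemma sub_instI_shI_f s u : sub_f (instI s) (ren_f shI u) = u.
Proof. rewrite sub_ren_f; apply sub_id_terms. Qed.
Lemma sub_instI_shI_m s u : sub_m (instI s) (ren_m shI u) = u.
Proof. rewrite sub_ren_m; apply sub_id_terms. Qed.
Lemma sub_instF_shF_f s u : sub_f (instF s) (ren_f shF u) = u.
Proof. rewrite sub_ren_f; apply sub_id_terms. Qed.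
Lemma sub_instM_shM_i s u : sub_i (instM s) (ren_i shM u) = u.
Proof. rewrite sub_ren_i; apply sub_id_terms. Qed.
Lemma sub_instM_shM_f s u : sub_f (instM s) (ren_f shM u) = u.
Proof. rewrite sub_ren_f; apply sub_id_terms. Qed.
Lemma sub_instM_shM_m s u : sub_m (instM s) (ren_m shM u) = u.
Proof. rewrite sub_ren_m; apply sub_id_terms. Qed.
Lemma sub_inst2_sh2_i a b u : sub_i (inst2 a b) (ren_i shI (ren_i shI u)) = u.
Proof. rewrite !sub_ren_i; apply sub_id_terms. Qed.
Lemma sub_inst2_sh2_m a b u : sub_m (inst2 a b) (ren_m shI (ren_m shI u)) = u.
Proof. rewrite !sub_ren_m; apply sub_id_terms. Qed.

Lemma sub_upsI_shI_m s u : sub_m (upsI s) (ren_m shI u) = ren_m shI (sub_m s u).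
Proof. rewrite sub_ren_m; symmetry; apply ren_sub_terms. Qed.

Lemma sub_succ0_shI_i u : sub_i succ0 (ren_i shI u) = ren_i shI u.
Proof. rewrite sub_ren_i, ren_as_sub_i; reflexivity. Qed.
Lemma sub_succ0_shI_f u : sub_f succ0 (ren_f shI u) = ren_f shI u.
Proof. rewrite sub_ren_f, ren_as_sub_f; reflexivity. Qed.

Lemma sub_lam_instI_shI m t :
  sub_f (upsI (upsI (instI m))) (ren_f (uprI (uprI shI)) t) = t.
Proof.
  rewrite sub_ren_f; transitivity (sub_f sub_id t); [f_equal; up_ext | apply sub_id_terms].
Qed.

Lemma sub_lam_succ0_shI h :
  sub_f (upsI (upsI succ0)) (ren_f (uprI (uprI shI)) h) = ren_f (uprI (uprI shI)) h.
Proof. rewrite sub_ren_f, ren_as_sub_f; f_equal; up_ext. Qed.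

Lemma ren_sub_comp_upshI_var0 : ren_sub_comp (uprI shI) (instI (IVar 0)) = sub_id.
Proof. up_ext. Qed.
Lemma sub_var0_up_shI_i u : sub_i (instI (IVar 0)) (ren_i (uprI shI) u) = u.
Proof. rewrite sub_ren_i, ren_sub_comp_upshI_var0; apply sub_id_terms. Qed.
Lemma sub_var0_up_shI_f u : sub_f (instI (IVar 0)) (ren_f (uprI shI) u) = u.
Proof. rewrite sub_ren_f, ren_sub_comp_upshI_var0; apply sub_id_terms. Qed.
Lemma sub_var0_up_shI_form p : sub_form (instI (IVar 0)) (ren_form (uprI shI) p) = p.
Proof. rewrite sub_ren_form, ren_sub_comp_upshI_var0; apply sub_id_form. Qed.

Hint Rewrite sub_instI_shI_i sub_instI_shI_f sub_instI_shI_m sub_instF_shF_f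
  sub_instM_shM_i sub_instM_shM_f sub_instM_shM_m sub_inst2_sh2_i sub_inst2_sh2_m
  sub_upsI_shI_m sub_succ0_shI_i sub_succ0_shI_f sub_lam_instI_shI sub_lam_succ0_shI
  sub_var0_up_shI_i sub_var0_up_shI_f sub_var0_up_shI_form : subst_simpl.

Ltac ssimpl := simpl; autorewrite with subst_simpl; simpl.
Ltac ssimpl_in H := simpl in H; autorewrite with subst_simpl in H; simpl in H.

Definition entails (H p : form) : Prop := LAP_proves (Imp H p).

Definition sh2f (H : form) : form := ren_form shI (ren_form shI H).

Ltac taut := let v := fresh "v" in intro v; simpl; cbv beta delta [i2 j2 sh2i sh2f]; simpl;
  repeat match goal with
         | |- context [tv v ?p] => destruct (tv v p)
         | |- context [v ?p] => destruct (v p)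
         end; reflexivity.

Lemma entails_of_tautology H p : tautology (Imp H p) -> entails H p.
Proof. apply Pr_taut. Qed.

Ltac from_ctx := apply entails_of_tautology; taut.

Lemma entails_of_proves H p : LAP_proves p -> entails H p.
Proof. intro Hp. eapply Pr_mp; [|exact Hp]. apply Pr_taut. taut. Qed.

Lemma entails_tauto1 H a b : tautology (Imp a b) -> entails H a -> entails H b.
Proof.
  intros T Ha. eapply Pr_mp; [|exact Ha]. apply Pr_taut. intro v. specialize (T v).
  simpl in *. destruct (tv v H), (tv v a), (tv v b); simpl in *; congruence.
Qed.

Lemma entails_tauto2 H a b c :
  tautology (Imp a (Imp b c)) -> entails H a -> entails H b -> entails H c.
Proof.
  intros T Ha Hb. eapply Pr_mp; [|exact Hb]. eapply Pr_mp; [|exact Ha].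
  apply Pr_taut. intro v. specialize (T v).
  simpl in *. destruct (tv v H), (tv v a), (tv v b), (tv v c); simpl in *; congruence.
Qed.

Lemma entails_tauto3 H a b c d : tautology (Imp a (Imp b (Imp c d))) ->
  entails H a -> entails H b -> entails H c -> entails H d.
Proof.
  intros T Ha Hb Hc. eapply Pr_mp; [|exact Hc]. eapply Pr_mp; [|exact Hb].
  eapply Pr_mp; [|exact Ha]. apply Pr_taut. intro v. specialize (T v). simpl in *.
  destruct (tv v H), (tv v a), (tv v b), (tv v c), (tv v d); simpl in *; congruence.
Qed.

Lemma entails_mp H a b : entails H (Imp a b) -> entails H a -> entails H b.
Proof. apply entails_tauto2. taut. Qed.
Lemma entails_and H a b : entails H a -> entails H b -> entails H (And a b).
Proof. apply entails_tauto2. taut. Qed.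
Lemma entails_andl H a b : entails H (And a b) -> entails H a.
Proof. apply entails_tauto1. taut. Qed.
Lemma entails_andr H a b : entails H (And a b) -> entails H b.
Proof. apply entails_tauto1. taut. Qed.
Lemma entails_orl H a b : entails H a -> entails H (Or a b).
Proof. apply entails_tauto1. taut. Qed.
Lemma entails_orr H a b : entails H b -> entails H (Or a b).
Proof. apply entails_tauto1. taut. Qed.
Lemma entails_absurd H a b : entails H a -> entails H (Not a) -> entails H b.
Proof. apply entails_tauto2. taut. Qed.

Lemma entails_refl H : entails H H.
Proof. from_ctx. Qed.
Lemma entails_hyp H a : entails (And H a) a.
Proof. from_ctx. Qed.

Lemma entails_trans H H' p : entails H H' -> entails H' p -> entails H p.
Proof.
  intros A B. eapply Pr_mp; [|exact A]. eapply Pr_mp; [|exact B]. apply Pr_taut. taut.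
Qed.

Lemma entails_weaken H a b : entails H b -> entails (And H a) b.
Proof. apply entails_trans; from_ctx. Qed.

Lemma entails_intro H a b : entails (And H a) b -> entails H (Imp a b).
Proof. intro P. eapply Pr_mp; [|exact P]. apply Pr_taut. taut. Qed.

Lemma entails_cases H a b :
  entails (And H a) b -> entails (And H (Not a)) b -> entails H b.
Proof.
  intros P1 P2. apply entails_intro in P1. apply entails_intro in P2.
  eapply entails_tauto2; [|exact P1|exact P2]. taut.
Qed.

Lemma entails_or_elim H a b c :
  entails H (Or a b) -> entails (And H a) c -> entails (And H b) c -> entails H c.
Proof.
  intros P0 P1 P2. apply entails_intro in P1. apply entails_intro in P2.
  eapply entails_tauto3; [|exact P0|exact P1|exact P2]. taut.
Qed.

Lemma entails_by_contradiction H a : entails (And H (Not a)) a -> entails H a.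
Proof. intro P. apply entails_cases with a; [apply entails_hyp| exact P]. Qed.

Lemma entails_contrapos H a b : entails (And H a) b -> entails H (Not b) -> entails H (Not a).
Proof. intros A B. apply entails_intro in A. eapply entails_tauto2; [|exact A|exact B]. taut. Qed.

Ltac weaken_hyps :=
  repeat match goal with
         | X : entails ?G _ |- entails (And ?G ?a) _ => apply (entails_weaken _ a) in X
         end.
Ltac intro_hyp := apply entails_intro; weaken_hyps.
Ltac case_on c := apply entails_cases with (a := c); weaken_hyps.

Lemma entails_gen H p : entails (ren_form shI H) p -> entails H (AllI p).
Proof. apply Pr_genI. Qed.
Lemma entails_inst H p t : entails H (AllI p) -> entails H (sub_form (instI t) p).
Proof. intro P. eapply entails_mp; [apply entails_of_proves, Pr_instI|exact P]. Qed.

Lemma entails_ind H p : is_open p = true -> entails H (sub_form (instI IZero) p) ->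
  entails (ren_form shI H) (Imp p (sub_form succ0 p)) -> entails H (AllI p).
Proof.
  intros O B S. eapply entails_mp; [apply entails_of_proves, Pr_ax, AxInd, O|].
  apply entails_and; [exact B| apply entails_gen, S].
Qed.

Ltac ax := apply entails_of_proves, Pr_ax; constructor.

Lemma entails_rewriteI H s t p a b : a = sub_form (instI s) p -> b = sub_form (instI t) p ->
  entails H (EqI s t) -> entails H a -> entails H b.
Proof.
  intros -> -> E A. eapply entails_mp; [|exact A]. eapply entails_mp; [|exact E].
  apply entails_of_proves, Pr_leibI.
Qed.
Lemma entails_rewriteF H s t p a b : a = sub_form (instF s) p -> b = sub_form (instF t) p ->
  entails H (EqF s t) -> entails H a -> entails H b.
Proof.
  intros -> -> E A. eapply entails_mp; [|exact A]. eapply entails_mp; [|exact E].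
  apply entails_of_proves, Pr_leibF.
Qed.
Lemma entails_rewriteM H s t p a b : a = sub_form (instM s) p -> b = sub_form (instM t) p ->
  entails H (EqM s t) -> entails H a -> entails H b.
Proof.
  intros -> -> E A. eapply entails_mp; [|exact A]. eapply entails_mp; [|exact E].
  apply entails_of_proves, Pr_leibM.
Qed.

Lemma eqI_refl H t : entails H (EqI t t).
Proof. apply entails_of_proves, Pr_reflI. Qed.
Lemma eqF_refl H t : entails H (EqF t t).
Proof. apply entails_of_proves, Pr_reflF. Qed.
Lemma eqM_refl H t : entails H (EqM t t).
Proof. apply entails_of_proves, Pr_reflM. Qed.

Lemma eqI_sym H s t : entails H (EqI s t) -> entails H (EqI t s).
Proof.
  intro E. refine (entails_rewriteI H s t (EqI (IVar 0) (ren_i shI s)) _ _ _ _ E (eqI_refl H s));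
    ssimpl; reflexivity.
Qed.
Lemma eqF_sym H s t : entails H (EqF s t) -> entails H (EqF t s).
Proof.
  intro E. refine (entails_rewriteF H s t (EqF (FVar 0) (ren_f shF s)) _ _ _ _ E (eqF_refl H s));
    ssimpl; reflexivity.
Qed.

Lemma eqI_trans H s t u : entails H (EqI s t) -> entails H (EqI t u) -> entails H (EqI s u).
Proof.
  intros A B. refine (entails_rewriteI H t u (EqI (ren_i shI s) (IVar 0)) _ _ _ _ B A);
    ssimpl; reflexivity.
Qed.
Lemma eqF_trans H s t u : entails H (EqF s t) -> entails H (EqF t u) -> entails H (EqF s u).
Proof.
  intros A B. refine (entails_rewriteF H t u (EqF (ren_f shF s) (FVar 0)) _ _ _ _ B A);
    ssimpl; reflexivity.
Qed.
Lemma eqM_trans H s t u : entails H (EqM s t) -> entails H (EqM t u) -> entails H (EqM s u).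
Proof.
  intros A B. refine (entails_rewriteM H t u (EqM (ren_m shM s) (MVar 0)) _ _ _ _ B A);
    ssimpl; reflexivity.
Qed.

(* a context [c] is a term whose hole is variable 0 of the sort of [s] and [t] *)
Lemma eqI_congr_i H s t c :
  entails H (EqI s t) -> entails H (EqI (sub_i (instI s) c) (sub_i (instI t) c)).
Proof.
  intro E. refine (entails_rewriteI H s t (EqI (ren_i shI (sub_i (instI s) c)) c) _ _ _ _ E
    (eqI_refl H _)); ssimpl; reflexivity.
Qed.
Lemma eqI_congr_f H s t c :
  entails H (EqI s t) -> entails H (EqF (sub_f (instI s) c) (sub_f (instI t) c)).
Proof.
  intro E. refine (entails_rewriteI H s t (EqF (ren_f shI (sub_f (instI s) c)) c) _ _ _ _ E
    (eqF_refl H _)); ssimpl; reflexivity.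
Qed.
Lemma eqI_congr_m H s t c :
  entails H (EqI s t) -> entails H (EqM (sub_m (instI s) c) (sub_m (instI t) c)).
Proof.
  intro E. refine (entails_rewriteI H s t (EqM (ren_m shI (sub_m (instI s) c)) c) _ _ _ _ E
    (eqM_refl H _)); ssimpl; reflexivity.
Qed.
Lemma eqF_congr_f H s t c :
  entails H (EqF s t) -> entails H (EqF (sub_f (instF s) c) (sub_f (instF t) c)).
Proof.
  intro E. refine (entails_rewriteF H s t (EqF (ren_f shF (sub_f (instF s) c)) c) _ _ _ _ E
    (eqF_refl H _)); ssimpl; reflexivity.
Qed.
Lemma eqM_congr_i H s t c :
  entails H (EqM s t) -> entails H (EqI (sub_i (instM s) c) (sub_i (instM t) c)).
Proof.
  intro E. refine (entails_rewriteM H s t (EqI (ren_i shM (sub_i (instM s) c)) c) _ _ _ _ E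
    (eqI_refl H _)); ssimpl; reflexivity.
Qed.
Lemma eqM_congr_f H s t c :
  entails H (EqM s t) -> entails H (EqF (sub_f (instM s) c) (sub_f (instM t) c)).
Proof.
  intro E. refine (entails_rewriteM H s t (EqF (ren_f shM (sub_f (instM s) c)) c) _ _ _ _ E
    (eqF_refl H _)); ssimpl; reflexivity.
Qed.

Ltac congr_by lem H E c := pose proof (lem H _ _ c E) as X; ssimpl_in X; exact X.

Lemma eqF_FAdd H a a' b b' :
  entails H (EqF a a') -> entails H (EqF b b') -> entails H (EqF (FAdd a b) (FAdd a' b')).
Proof.
  intros A B. eapply eqF_trans.
  - congr_by eqF_congr_f H A (FAdd (FVar 0) (ren_f shF b)).
  - congr_by eqF_congr_f H B (FAdd (ren_f shF a') (FVar 0)).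
Qed.
Lemma eqF_FMul H a a' b b' :
  entails H (EqF a a') -> entails H (EqF b b') -> entails H (EqF (FMul a b) (FMul a' b')).
Proof.
  intros A B. eapply eqF_trans.
  - congr_by eqF_congr_f H A (FMul (FVar 0) (ren_f shF b)).
  - congr_by eqF_congr_f H B (FMul (ren_f shF a') (FVar 0)).
Qed.
Lemma eqF_FOpp H a a' : entails H (EqF a a') -> entails H (EqF (FOpp a) (FOpp a')).
Proof. intro A. congr_by eqF_congr_f H A (FOpp (FVar 0)). Qed.
Lemma eqI_IAdd H a a' b b' :
  entails H (EqI a a') -> entails H (EqI b b') -> entails H (EqI (IAdd a b) (IAdd a' b')).
Proof.
  intros A B. eapply eqI_trans.
  - congr_by eqI_congr_i H A (IAdd (IVar 0) (ren_i shI b)).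
  - congr_by eqI_congr_i H B (IAdd (ren_i shI a') (IVar 0)).
Qed.
Lemma eqI_IMonus H a a' b b' :
  entails H (EqI a a') -> entails H (EqI b b') -> entails H (EqI (IMonus a b) (IMonus a' b')).
Proof.
  intros A B. eapply eqI_trans.
  - congr_by eqI_congr_i H A (IMonus (IVar 0) (ren_i shI b)).
  - congr_by eqI_congr_i H B (IMonus (ren_i shI a') (IVar 0)).
Qed.
Lemma eqF_FEntry H A A' i i' j j' : entails H (EqM A A') -> entails H (EqI i i') ->
  entails H (EqI j j') -> entails H (EqF (FEntry A i j) (FEntry A' i' j')).
Proof.
  intros EA Ei Ej. eapply eqF_trans; [|eapply eqF_trans].
  - congr_by eqM_congr_f H EA (FEntry (MVar 0) (ren_i shM i) (ren_i shM j)).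
  - congr_by eqI_congr_f H Ei (FEntry (ren_m shI A') (IVar 0) (ren_i shI j)).
  - congr_by eqI_congr_f H Ej (FEntry (ren_m shI A') (ren_i shI i') (IVar 0)).
Qed.
Lemma eqF_FSum H A A' : entails H (EqM A A') -> entails H (EqF (FSum A) (FSum A')).
Proof. intro EA. congr_by eqM_congr_f H EA (FSum (MVar 0)). Qed.
Lemma eqI_IRows H A A' : entails H (EqM A A') -> entails H (EqI (IRows A) (IRows A')).
Proof. intro EA. congr_by eqM_congr_i H EA (IRows (MVar 0)). Qed.
Lemma eqI_ICols H A A' : entails H (EqM A A') -> entails H (EqI (ICols A) (ICols A')).
Proof. intro EA. congr_by eqM_congr_i H EA (ICols (MVar 0)). Qed.
Lemma eqM_MLam H m m' n n' t : entails H (EqI m m') -> entails H (EqI n n') ->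
  entails H (EqM (MLam m n t) (MLam m' n' t)).
Proof.
  intros Em En. eapply eqM_trans.
  - congr_by eqI_congr_m H Em (MLam (IVar 0) (ren_i shI n) (ren_f (uprI (uprI shI)) t)).
  - congr_by eqI_congr_m H En (MLam (ren_i shI m') (IVar 0) (ren_f (uprI (uprI shI)) t)).
Qed.

Lemma le_congr H a a' b b' :
  entails H (EqI a a') -> entails H (EqI b b') -> entails H (Le a b) -> entails H (Le a' b').
Proof.
  intros A B P.
  refine (entails_rewriteI H b b' (Le (ren_i shI a') (IVar 0)) _ _ _ _ B _);
    [ssimpl; reflexivity.. |].
  refine (entails_rewriteI H a a' (Le (IVar 0) (ren_i shI b)) _ _ _ _ A P); ssimpl; reflexivity.
Qed.
Lemma eqI_congr H a a' b b' :
  entails H (EqI a a') -> entails H (EqI b b') -> entails H (EqI a b) -> entails H (EqI a' b').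
Proof. intros A B P. eapply eqI_trans; [apply eqI_sym, A|]. eapply eqI_trans; eauto. Qed.

Lemma faddC H a b : entails H (EqF (FAdd a b) (FAdd b a)). Proof. ax. Qed.
Lemma faddA H a b c : entails H (EqF (FAdd (FAdd a b) c) (FAdd a (FAdd b c))). Proof. ax. Qed.
Lemma fadd0 H a : entails H (EqF (FAdd a FZero) a). Proof. ax. Qed.
Lemma faddN H a : entails H (EqF (FAdd a (FOpp a)) FZero). Proof. ax. Qed.
Lemma fmulC H a b : entails H (EqF (FMul a b) (FMul b a)). Proof. ax. Qed.
Lemma fmul1 H a : entails H (EqF (FMul a FOne) a). Proof. ax. Qed.
Lemma fmulDr H a b c : entails H (EqF (FMul a (FAdd b c)) (FAdd (FMul a b) (FMul a c))).
Proof. ax. Qed.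
Lemma fmulV H a : entails H (Not (EqF a FZero)) -> entails H (EqF (FMul a (FInv a)) FOne).
Proof. intro P. eapply entails_mp; [ax| exact P]. Qed.
Lemma f0_neq1 H : entails H (Not (EqF FZero FOne)). Proof. ax. Qed.

Lemma fadd0l H a : entails H (EqF (FAdd FZero a) a).
Proof. eapply eqF_trans; [apply faddC| apply fadd0]. Qed.

Lemma fmul0 H x : entails H (EqF (FMul x FZero) FZero).
Proof.
  set (y := FMul x FZero).
  assert (E : entails H (EqF y (FAdd y y))).
  { eapply eqF_trans; [| apply fmulDr]. apply eqF_FMul; [apply eqF_refl| apply eqF_sym, fadd0]. }
  apply eqF_sym.
  eapply eqF_trans; [apply eqF_sym, (faddN H y)|].
  eapply eqF_trans; [apply eqF_FAdd; [exact E| apply eqF_refl]|].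
  eapply eqF_trans; [apply faddA|].
  eapply eqF_trans; [apply eqF_FAdd; [apply eqF_refl| apply faddN]|].
  apply fadd0.
Qed.
Lemma fmul0l H x : entails H (EqF (FMul FZero x) FZero).
Proof. eapply eqF_trans; [apply fmulC| apply fmul0]. Qed.

Lemma fsub_eq0 H a b : entails H (EqF a b) -> entails H (EqF (FAdd a (FOpp b)) FZero).
Proof. intro E. eapply eqF_trans; [apply eqF_FAdd; [exact E| apply eqF_refl]| apply faddN]. Qed.

Lemma feq_of_sub0 H a b : entails H (EqF (FAdd a (FOpp b)) FZero) -> entails H (EqF a b).
Proof.
  intro E.
  eapply eqF_trans; [apply eqF_sym, fadd0|].
  eapply eqF_trans; [apply eqF_FAdd; [apply eqF_refl| apply eqF_sym, (faddN H b)]|].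
  eapply eqF_trans; [apply eqF_FAdd; [apply eqF_refl| apply faddC]|].
  eapply eqF_trans; [apply eqF_sym, faddA|].
  eapply eqF_trans; [apply eqF_FAdd; [exact E| apply eqF_refl]|].
  apply fadd0l.
Qed.

Lemma fsub11 H : entails H (EqF (FAdd FOne (FOpp FOne)) FZero).
Proof. apply faddN. Qed.
Lemma fsub10 H : entails H (EqF (FAdd FOne (FOpp FZero)) FOne).
Proof.
  assert (N0 : entails H (EqF (FOpp FZero) FZero))
    by (eapply eqF_trans; [apply eqF_sym, fadd0l| apply faddN]).
  eapply eqF_trans; [apply eqF_FAdd; [apply eqF_refl| exact N0]| apply fadd0].
Qed.

Lemma iaddC H a b : entails H (EqI (IAdd a b) (IAdd b a)). Proof. ax. Qed.
Lemma iadd0 H a : entails H (EqI (IAdd a IZero) a). Proof. ax. Qed.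
Lemma iadd0l H a : entails H (EqI (IAdd IZero a) a).
Proof. eapply eqI_trans; [apply iaddC| apply iadd0]. Qed.
Lemma le_refl H a : entails H (Le a a). Proof. ax. Qed.
Lemma le0 H a : entails H (Le IZero a). Proof. ax. Qed.
Lemma le_trans H a b c : entails H (Le a b) -> entails H (Le b c) -> entails H (Le a c).
Proof. intros A B. eapply entails_mp; [ax| apply entails_and; eauto]. Qed.
Lemma le_anti H a b : entails H (Le a b) -> entails H (Le b a) -> entails H (EqI a b).
Proof. intros A B. eapply entails_mp; [ax| apply entails_and; eauto]. Qed.
Lemma le_total H a b : entails H (Or (Le a b) (Le b a)). Proof. ax. Qed.
Lemma lt_add2r H a b u : entails H (Lt a b) -> entails H (Lt (IAdd a u) (IAdd b u)).
Proof. intros A. eapply entails_mp; [ax| exact A]. Qed.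
Lemma lt_01 H : entails H (Lt IZero IOne). Proof. ax. Qed.
Lemma succ_le_of_lt H a b : entails H (Lt a b) -> entails H (Le (IAdd a IOne) b).
Proof. intros A. eapply entails_mp; [ax| exact A]. Qed.
Lemma ltW H a b : entails H (Lt a b) -> entails H (Le a b).
Proof. apply entails_andl. Qed.
Lemma lt_neq H a b : entails H (Lt a b) -> entails H (Not (EqI a b)).
Proof. apply entails_andr. Qed.
Lemma lt_of_le_neq H a b :
  entails H (Le a b) -> entails H (Not (EqI a b)) -> entails H (Lt a b).
Proof. apply entails_and. Qed.

Lemma le_of_eq H a b : entails H (EqI a b) -> entails H (Le a b).
Proof. intros E. eapply le_congr; [apply eqI_refl| exact E| apply le_refl]. Qed.

Lemma le_succ_succ H a b : entails H (Le a b) -> entails H (Le (IAdd a IOne) (IAdd b IOne)).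
Proof.
  intros A. apply entails_cases with (EqI a b).
  - apply le_of_eq, eqI_IAdd; [apply entails_hyp| apply eqI_refl].
  - apply ltW, lt_add2r, lt_of_le_neq; [apply entails_weaken, A| apply entails_hyp].
Qed.

Lemma lt_of_not_le H a b : entails H (Not (Le a b)) -> entails H (Lt b a).
Proof.
  intros A. apply lt_of_le_neq.
  - eapply entails_tauto2; [| apply (le_total H a b)| exact A]. taut.
  - eapply entails_contrapos; [| exact A]. apply le_of_eq, eqI_sym, entails_hyp.
Qed.

Lemma le_of_succ_le_succ H a b :
  entails H (Le (IAdd a IOne) (IAdd b IOne)) -> entails H (Le a b).
Proof.
  intros A. apply entails_by_contradiction.
  assert (L : entails (And H (Not (Le a b))) (Lt (IAdd b IOne) (IAdd a IOne)))
    by (apply lt_add2r, lt_of_not_le, entails_hyp).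
  eapply entails_absurd; [| apply (lt_neq _ _ _ L)].
  apply le_anti; [apply ltW, L| apply entails_weaken, A].
Qed.

Lemma succ_inj H a b : entails H (EqI (IAdd a IOne) (IAdd b IOne)) -> entails H (EqI a b).
Proof.
  intros E. apply le_anti; apply le_of_succ_le_succ, le_of_eq; [exact E| apply eqI_sym, E].
Qed.

Lemma lt_succ_diag H a : entails H (Lt a (IAdd a IOne)).
Proof.
  pose proof (lt_add2r H IZero IOne a (lt_01 H)) as L.
  apply lt_of_le_neq.
  - eapply le_congr; [apply iadd0l| apply iaddC| apply ltW, L].
  - eapply entails_contrapos; [| apply (lt_neq _ _ _ L)].
    eapply eqI_congr; [apply eqI_sym, iadd0l | apply iaddC | apply entails_hyp].
Qed.
Lemma le_succ_diag H a : entails H (Le a (IAdd a IOne)).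
Proof. apply ltW, lt_succ_diag. Qed.

Lemma le_one_succ H a : entails H (Le IOne (IAdd a IOne)).
Proof. eapply le_congr; [apply iadd0l| apply eqI_refl| apply le_succ_succ, le0]. Qed.

Lemma le_lt_trans H a b c : entails H (Le a b) -> entails H (Lt b c) -> entails H (Lt a c).
Proof.
  intros A B. apply lt_of_le_neq.
  - eapply le_trans; [exact A| apply ltW, B].
  - eapply entails_contrapos; [| apply (lt_neq _ _ _ B)].
    apply le_anti; [apply ltW, entails_weaken, B|].
    eapply le_congr; [apply entails_hyp| apply eqI_refl| apply entails_weaken, A].
Qed.

Lemma succ_monus_one H a : entails H (EqI (IMonus (IAdd a IOne) IOne) a).
Proof. apply succ_inj. eapply entails_mp; [ax| apply le_one_succ]. Qed.

Lemma eq_succ_of_le_succ H m a :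
  entails H (Le m (IAdd a IOne)) -> entails H (Not (Le m a)) -> entails H (EqI m (IAdd a IOne)).
Proof. intros A B. apply le_anti; [exact A|]. apply succ_le_of_lt, lt_of_not_le, B. Qed.

Lemma eq0_or_le1 H a : entails H (Or (EqI a IZero) (Le IOne a)).
Proof.
  apply entails_cases with (EqI a IZero).
  - apply entails_orl, entails_hyp.
  - apply entails_orr. eapply le_congr; [apply iadd0l| apply eqI_refl|].
    apply succ_le_of_lt, lt_of_le_neq; [apply le0|].
    eapply entails_contrapos; [| apply entails_hyp]. apply eqI_sym, entails_hyp.
Qed.

Lemma not_one_le_zero H : entails H (Not (Le IOne IZero)).
Proof.
  eapply entails_contrapos; [| apply (lt_neq _ _ _ (lt_01 H))].
  apply le_anti; [apply le0| apply entails_hyp].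
Qed.

Lemma succ_neq_of_le H a b : entails H (Le a b) -> entails H (Not (EqI (IAdd b IOne) a)).
Proof.
  intro A. pose proof (le_lt_trans _ _ _ _ A (lt_succ_diag H b)) as L.
  eapply entails_contrapos; [apply eqI_sym, entails_hyp| apply (lt_neq _ _ _ L)].
Qed.

Lemma lt_one_succ H a : entails H (Le IOne a) -> entails H (Lt IOne (IAdd a IOne)).
Proof. intros A. eapply le_lt_trans; [exact A| apply lt_succ_diag]. Qed.

Lemma le_succ_r H a b : entails H (Le a b) -> entails H (Le a (IAdd b IOne)).
Proof. intros A. eapply le_trans; [exact A| apply le_succ_diag]. Qed.

Lemma le_of_succ_le H a b : entails H (Le (IAdd a IOne) b) -> entails H (Le a b).
Proof. intros A. eapply le_trans; [apply le_succ_diag| exact A]. Qed.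

Lemma lt_congr H a a' b b' :
  entails H (EqI a a') -> entails H (EqI b b') -> entails H (Lt a b) -> entails H (Lt a' b').
Proof.
  intros A B L. apply lt_of_le_neq.
  - eapply le_congr; [exact A| exact B| apply ltW, L].
  - eapply entails_contrapos; [| apply (lt_neq _ _ _ L)].
    eapply eqI_congr; [apply eqI_sym, entails_weaken, A| apply eqI_sym, entails_weaken, B|].
    apply entails_hyp.
Qed.

Lemma lam_rows H m n t : entails H (EqI (IRows (MLam m n t)) m). Proof. ax. Qed.
Lemma lam_cols H m n t : entails H (EqI (ICols (MLam m n t)) n). Proof. ax. Qed.
Lemma lam_entry H m n t i j :
  entails H (Le IOne i) -> entails H (Le i m) -> entails H (Le IOne j) -> entails H (Le j n) ->
  entails H (EqF (FEntry (MLam m n t) i j) (sub_f (inst2 i j) t)).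
Proof. intros A B C D. eapply entails_mp; [ax|]. apply entails_and; apply entails_and; auto. Qed.

Lemma entry_row0 H A i j : entails H (EqI i IZero) -> entails H (EqF (FEntry A i j) FZero).
Proof. intro E. eapply entails_mp; [ax|]. apply entails_orl, entails_orl, E. Qed.
Lemma entry_col0 H A i j : entails H (EqI j IZero) -> entails H (EqF (FEntry A i j) FZero).
Proof. intro E. eapply entails_mp; [ax|]. apply entails_orr, entails_orl, E. Qed.

Lemma sum_empty H A : entails H (Or (EqI (IRows A) IZero) (EqI (ICols A) IZero)) ->
  entails H (EqF (FSum A) FZero).
Proof. intro E. eapply entails_mp; [ax| exact E]. Qed.
Lemma sum_single H A : entails H (EqI (IRows A) IOne) -> entails H (EqI (ICols A) IOne) ->
  entails H (EqF (FSum A) (FEntry A IOne IOne)).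
Proof. intros E F. eapply entails_mp; [ax| apply entails_and; eauto]. Qed.
Lemma sum_row H A : entails H (EqI (IRows A) IOne) -> entails H (Lt IOne (ICols A)) ->
  entails H (EqF (FSum A)
    (FAdd (FSum (MLam IOne (IMonus (ICols A) IOne) (FEntry (sh2m A) i2 j2)))
          (FEntry A IOne (ICols A)))).
Proof. intros E F. eapply entails_mp; [ax| apply entails_and; eauto]. Qed.
Lemma sum_col H A : entails H (EqI (ICols A) IOne) -> entails H (EqF (FSum A) (FSum (MTr A))).
Proof. intro E. eapply entails_mp; [ax| exact E]. Qed.
Lemma pow_zero H A : entails H (EqI (IRows A) (ICols A)) ->
  entails H (EqM (MPow IZero A) (MId (IRows A))).
Proof. intro E. eapply entails_mp; [ax| exact E]. Qed.
Lemma pow_succ H k A : entails H (EqI (IRows A) (ICols A)) ->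
  entails H (EqM (MPow (IAdd k IOne) A) (MMul (MPow k A) A)).
Proof. intro E. eapply entails_mp; [ax| exact E]. Qed.

Definition sh2_body (t : fterm) : fterm := ren_f (uprI (uprI shI)) (ren_f (uprI (uprI shI)) t).

Lemma sub_inst2_sh2_body t : sub_f (inst2 i2 j2) (sh2_body t) = t.
Proof.
  unfold sh2_body; rewrite !sub_ren_f.
  transitivity (sub_f sub_id t); [f_equal; up_ext| apply sub_id_terms].
Qed.

Definition lam_ctx (H : form) (m n : iterm) : form :=
  And (sh2f H) (And (And (Le IOne i2) (Le i2 (sh2i m))) (And (Le IOne j2) (Le j2 (sh2i n)))).

Lemma lam_ext H m n t1 t2 :
  entails (lam_ctx H m n) (EqF t1 t2) -> entails H (EqM (MLam m n t1) (MLam m n t2)).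
Proof.
  intro P. eapply entails_mp; [ax|].
  apply entails_and; [apply entails_and|].
  { eapply eqI_trans; [apply lam_rows| apply eqI_sym, lam_rows]. }
  { eapply eqI_trans; [apply lam_cols| apply eqI_sym, lam_cols]. }
  apply entails_gen, entails_intro, entails_gen, entails_intro; cbn.
  fold (sh2_body t1) (sh2_body t2) (sh2i m) (sh2i n) (sh2f H).
  set (C := And _ _).
  assert (HC : entails C (sh2f H)) by from_ctx.
  assert (Ri : entails C (Le i2 (sh2i m))).
  { eapply le_congr; [apply eqI_refl| apply (lam_rows _ _ (sh2i n) (sh2_body t1))| from_ctx]. }
  assert (Rj : entails C (Le j2 (sh2i n))).
  { eapply le_congr; [apply eqI_refl| apply lam_cols|]. apply entails_hyp. }
  clearbody C.
  eapply entails_or_elim; [apply (eq0_or_le1 C i2)| |].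
  { eapply eqF_trans; [apply entry_row0, entails_hyp| apply eqF_sym, entry_row0, entails_hyp]. }
  eapply entails_or_elim; [apply (eq0_or_le1 _ j2)| |].
  { eapply eqF_trans; [apply entry_col0, entails_hyp| apply eqF_sym, entry_col0, entails_hyp]. }
  assert (Ctx : entails (And (And C (Le IOne i2)) (Le IOne j2)) (lam_ctx H m n)).
  { repeat apply entails_and; try (apply entails_hyp || apply entails_weaken, entails_hyp);
      do 2 apply entails_weaken; assumption. }
  eapply eqF_trans; [apply lam_entry; try apply entails_trans with (1 := Ctx); from_ctx|].
  eapply eqF_trans; [|apply eqF_sym, lam_entry; apply entails_trans with (1 := Ctx); from_ctx].
  rewrite !sub_inst2_sh2_body. apply entails_trans with (1 := Ctx), P.
Qed.

(** * Characteristic terms of open formulas *)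

Definition characteristic (phi : form) (d : fterm) : Prop :=
  entails phi (EqF d FOne) /\ entails (Not phi) (EqF d FZero).

Lemma characteristic_iff phi d : characteristic phi d -> LAP_proves (Iff phi (EqF d FOne)).
Proof.
  intros [G1 G2].
  assert (P2 : entails (EqF d FOne) phi).
  { apply entails_by_contradiction. eapply entails_absurd; [| apply (f0_neq1 _)].
    eapply eqF_trans; [apply eqF_sym, entails_trans with (1 := entails_hyp _ _), G2|].
    apply entails_weaken, entails_refl. }
  unfold entails in *. eapply Pr_mp; [eapply Pr_mp; [|exact G1]|exact P2]. apply Pr_taut. taut.
Qed.

Lemma characteristic_equiv phi psi d :
  entails phi psi -> entails psi phi -> characteristic psi d -> characteristic phi d.
Proof.
  intros A B [G1 G2]. split.
  - eapply entails_trans; eauto.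
  - eapply entails_trans; [|exact G2]. eapply entails_contrapos; [| apply entails_refl].
    eapply entails_trans; [apply entails_hyp| exact B].
Qed.

Definition chi_le (a b : iterm) : fterm := FCond (QLe a b) FOne FZero.
Definition chi_eqI (a b : iterm) : fterm := FCond (QEq a b) FOne FZero.
(* [u u^-1] is [1] for [u = a - b] nonzero and [0] for [u = 0], whatever the value of [0^-1] *)
Definition chi_eqF (a b : fterm) : fterm :=
  let u := FAdd a (FOpp b) in FAdd FOne (FOpp (FMul u (FInv u))).
Definition chi_not (d : fterm) : fterm := FAdd FOne (FOpp d).
Definition chi_and (d e : fterm) : fterm := FMul d e.
Definition chi_or (d e : fterm) : fterm := chi_not (chi_and (chi_not d) (chi_not e)).
Definition chi_imp (d e : fterm) : fterm := chi_not (chi_and d (chi_not e)).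

Lemma characteristic_le a b : characteristic (Le a b) (chi_le a b).
Proof. split; (eapply entails_mp; [ax| apply entails_refl]). Qed.
Lemma characteristic_eqI a b : characteristic (EqI a b) (chi_eqI a b).
Proof. split; (eapply entails_mp; [ax| apply entails_refl]). Qed.

Lemma characteristic_eqF a b : characteristic (EqF a b) (chi_eqF a b).
Proof.
  unfold chi_eqF. split.
  - assert (U : entails (EqF a b) (EqF (FAdd a (FOpp b)) FZero))
      by (apply fsub_eq0, entails_refl).
    eapply eqF_trans; [apply eqF_FAdd; [apply eqF_refl| apply eqF_FOpp]| apply fsub10].
    eapply eqF_trans; [apply eqF_FMul; [exact U| apply eqF_refl]| apply fmul0l].
  - assert (U : entails (Not (EqF a b)) (Not (EqF (FAdd a (FOpp b)) FZero))).
    { eapply entails_contrapos; [| apply entails_refl]. apply feq_of_sub0, entails_hyp. }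
    eapply eqF_trans; [apply eqF_FAdd; [apply eqF_refl| apply eqF_FOpp, fmulV, U]| apply fsub11].
Qed.

Lemma characteristic_not p d : characteristic p d -> characteristic (Not p) (chi_not d).
Proof.
  intros [G1 G2]. split.
  - eapply eqF_trans; [apply eqF_FAdd; [apply eqF_refl| apply eqF_FOpp, G2]| apply fsub10].
  - assert (A : entails (Not (Not p)) (EqF d FOne))
      by (eapply entails_trans; [|exact G1]; from_ctx).
    eapply eqF_trans; [apply eqF_FAdd; [apply eqF_refl| apply eqF_FOpp, A]| apply fsub11].
Qed.

Lemma characteristic_and p q d e :
  characteristic p d -> characteristic q e -> characteristic (And p q) (chi_and d e).
Proof.
  intros [G1 G2] [E1 E2]. split.
  - eapply eqF_trans; [apply eqF_FMul| apply fmul1].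
    + eapply entails_trans; [|exact G1]; from_ctx.
    + eapply entails_trans; [|exact E1]; from_ctx.
  - apply entails_cases with p.
    + eapply eqF_trans; [apply eqF_FMul; [apply eqF_refl|]| apply fmul0].
      eapply entails_trans; [|exact E2]; from_ctx.
    + eapply eqF_trans; [apply eqF_FMul; [|apply eqF_refl]| apply fmul0l].
      eapply entails_trans; [|exact G2]; from_ctx.
Qed.

Lemma characteristic_or p q d e :
  characteristic p d -> characteristic q e -> characteristic (Or p q) (chi_or d e).
Proof.
  intros G E. eapply characteristic_equiv;
    [| | apply characteristic_not, characteristic_and; apply characteristic_not; eauto];
    from_ctx.
Qed.

Lemma characteristic_imp p q d e :
  characteristic p d -> characteristic q e -> characteristic (Imp p q) (chi_imp d e).
Proof.
  intros G E. eapply characteristic_equiv;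
    [| | apply characteristic_not, characteristic_and; [exact G| apply characteristic_not; eauto]];
    from_ctx.
Qed.

(** * Row sums with a single nonzero entry *)

(* instantiates a lambda body at row 1, leaving the column as index variable 0 *)
Definition sub_row1 : sub :=
  Sub (fun n => match n with 0 => IVar 0 | 1 => IOne | S (S k) => IVar (S k) end) FVar MVar.

Definition row_entry (h : fterm) (a : iterm) : fterm := sub_f (inst2 IOne a) h.

Lemma sub_instI_row1 a h : sub_f (instI a) (sub_f sub_row1 h) = row_entry h a.
Proof. unfold row_entry. subst_eq. Qed.

Lemma eqF_row_entry H h a b :
  entails H (EqI a b) -> entails H (EqF (row_entry h a) (row_entry h b)).
Proof. intro E. rewrite <- !sub_instI_row1. apply eqI_congr_f, E. Qed.

Lemma lam_row_entry H M h a : entails H (Le IOne a) -> entails H (Le a M) ->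
  entails H (EqF (FEntry (MLam IOne M h) IOne a) (row_entry h a)).
Proof. intros A B. apply lam_entry; auto using le_refl. Qed.

Lemma lam_row_prefix H nu h :
  entails H (EqM (MLam IOne (IMonus (ICols (MLam IOne (IAdd nu IOne) h)) IOne)
                       (FEntry (sh2m (MLam IOne (IAdd nu IOne) h)) i2 j2))
                 (MLam IOne nu h)).
Proof.
  eapply eqM_trans.
  { apply eqM_MLam; [apply eqI_refl|].
    eapply eqI_trans; [apply eqI_IMonus; [apply lam_cols| apply eqI_refl]| apply succ_monus_one]. }
  apply lam_ext. unfold lam_ctx, sh2m; cbn; fold (sh2_body h).
  eapply eqF_trans; [apply lam_entry; try apply le_succ_r; from_ctx|].
  rewrite sub_inst2_sh2_body. apply eqF_refl.
Qed.

Lemma rowsum_succ H nu h :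
  entails H (EqF (FSum (MLam IOne (IAdd nu IOne) h))
                 (FAdd (FSum (MLam IOne nu h)) (row_entry h (IAdd nu IOne)))).
Proof.
  eapply entails_or_elim; [apply (eq0_or_le1 H nu)| |].
  - set (G := And H _). assert (E : entails G (EqI nu IZero)) by apply entails_hyp.
    assert (E1 : entails G (EqI (IAdd nu IOne) IOne))
      by (eapply eqI_trans; [apply eqI_IAdd; [exact E| apply eqI_refl]| apply iadd0l]).
    clearbody G.
    eapply eqF_trans; [apply sum_single; [apply lam_rows|]|].
    { eapply eqI_trans; [apply lam_cols| exact E1]. }
    eapply eqF_trans; [apply lam_row_entry; [apply le_refl| apply le_one_succ]|].
    eapply eqF_trans; [apply eqF_row_entry, eqI_sym, E1| apply eqF_sym].
    eapply eqF_trans; [apply eqF_FAdd; [apply sum_empty, entails_orr| apply eqF_refl]|].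
    + eapply eqI_trans; [apply lam_cols| exact E].
    + apply fadd0l.
  - eapply eqF_trans; [apply sum_row; [apply lam_rows| eapply lt_congr]|].
    + apply eqI_refl.
    + apply eqI_sym, lam_cols.
    + apply lt_one_succ, entails_hyp.
    + apply eqF_FAdd; [apply eqF_FSum, lam_row_prefix|].
      eapply eqF_trans; [apply eqF_FEntry; [apply eqM_refl| apply eqI_refl| apply lam_cols]|].
      apply lam_row_entry; [apply le_one_succ| apply le_refl].
Qed.

Definition row_zero_except (M m : iterm) (h : fterm) : form :=
  AllI (Imp (And (And (Le IOne (IVar 0)) (Le (IVar 0) (ren_i shI M)))
                 (Not (EqI (IVar 0) (ren_i shI m))))
            (EqF (sub_f sub_row1 h) FZero)).

Lemma ren_row_zero_except M m h : ren_form shI (row_zero_except M m h) =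
  row_zero_except (ren_i shI M) (ren_i shI m) (ren_f (uprI (uprI shI)) h).
Proof.
  unfold row_zero_except; cbn.
  assert (E1 : forall u, ren_i (uprI shI) (ren_i shI u) = ren_i shI (ren_i shI u))
    by (intro; subst_eq).
  assert (E2 : ren_f (uprI shI) (sub_f sub_row1 h) = sub_f sub_row1 (ren_f (uprI (uprI shI)) h))
    by subst_eq.
  rewrite !E1, E2. reflexivity.
Qed.

Lemma row_zero_except_entry H M m h a : entails H (row_zero_except M m h) ->
  entails H (Le IOne a) -> entails H (Le a M) -> entails H (Not (EqI a m)) ->
  entails H (EqF (row_entry h a) FZero).
Proof.
  intros Z A B C. pose proof (entails_inst H _ a Z) as X. ssimpl_in X.
  rewrite sub_instI_row1 in X. eapply entails_mp; [exact X| repeat apply entails_and; auto].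
Qed.

Lemma rowsum_skip H M m h nu : entails H (row_zero_except M m h) ->
  entails H (Le (IAdd nu IOne) M) -> entails H (Not (EqI (IAdd nu IOne) m)) ->
  entails H (EqF (FSum (MLam IOne (IAdd nu IOne) h)) (FSum (MLam IOne nu h))).
Proof.
  intros Z B N. eapply eqF_trans; [apply rowsum_succ| eapply eqF_trans; [| apply fadd0]].
  apply eqF_FAdd; [apply eqF_refl|]. apply row_zero_except_entry with M m; auto using le_one_succ.
Qed.

Definition rowsum_inv (M m : iterm) (h V : fterm) (nu : iterm) : form :=
  Imp (Le nu M) (And (Imp (Le m nu) (EqF (FSum (MLam IOne nu h)) V))
                     (Imp (Not (Le m nu)) (EqF (FSum (MLam IOne nu h)) FZero))).

Lemma rowsum_inv_succ H M m h V nu :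
  entails H (row_zero_except M m h) -> entails H (EqF V (row_entry h m)) ->
  entails H (rowsum_inv M m h V nu) -> entails H (rowsum_inv M m h V (IAdd nu IOne)).
Proof.
  intros Z HV IH. intro_hyp.
  set (G := And H (Le (IAdd nu IOne) M)) in *.
  assert (B : entails G (Le (IAdd nu IOne) M)) by apply entails_hyp.
  assert (IH1 := entails_mp _ _ _ IH (le_of_succ_le _ _ _ B)).
  apply entails_andl in IH1 as IHle. apply entails_andr in IH1 as IHnle. clear IH IH1.
  clearbody G. apply entails_and; intro_hyp.
  - case_on (Le m nu).
    + eapply eqF_trans; [apply rowsum_skip with M m; auto; apply succ_neq_of_le, entails_hyp|].
      eapply entails_mp; [exact IHle| apply entails_hyp].
    + assert (Em : entails (And (And G (Le m (IAdd nu IOne))) (Not (Le m nu)))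
                           (EqI m (IAdd nu IOne)))
        by (apply eq_succ_of_le_succ; [apply entails_weaken, entails_hyp| apply entails_hyp]).
      eapply eqF_trans; [apply rowsum_succ|].
      eapply eqF_trans; [apply eqF_FAdd; [| apply eqF_refl]|].
      { eapply entails_mp; [exact IHnle| apply entails_hyp]. }
      eapply eqF_trans; [apply fadd0l|].
      eapply eqF_trans; [apply eqF_row_entry, eqI_sym, Em| apply eqF_sym, HV].
  - assert (N : entails (And G (Not (Le m (IAdd nu IOne)))) (Not (Le m nu)))
      by (eapply entails_contrapos; [apply le_succ_r, entails_hyp| apply entails_hyp]).
    eapply eqF_trans; [apply rowsum_skip with M m; auto|].
    + eapply entails_contrapos; [apply le_of_eq, eqI_sym, entails_hyp| apply entails_hyp].
    + eapply entails_mp; [exact IHnle| exact N].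
Qed.

(* hypotheses packaged as a formula, so that they can serve as the context of an induction *)
Definition rowsum_hyp (M m : iterm) (h : fterm) : form :=
  And (Le IOne m) (And (Le m M) (row_zero_except M m h)).

Lemma ren_rowsum_hyp M m h : ren_form shI (rowsum_hyp M m h) =
  rowsum_hyp (ren_i shI M) (ren_i shI m) (ren_f (uprI (uprI shI)) h).
Proof. unfold rowsum_hyp. rewrite <- ren_row_zero_except. reflexivity. Qed.

Lemma rowsum_hyp_sum M m h :
  entails (rowsum_hyp M m h) (EqF (FSum (MLam IOne M h)) (row_entry h m)).
Proof.
  set (inv := rowsum_inv (ren_i shI M) (ren_i shI m) (ren_f (uprI (uprI shI)) h)
                (ren_f shI (row_entry h m)) (IVar 0)).
  assert (A : entails (rowsum_hyp M m h) (AllI inv)).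
  { apply entails_ind; [reflexivity| |].
    - unfold inv, rowsum_inv; ssimpl. intro_hyp. apply entails_and; intro_hyp.
      + eapply entails_absurd; [| apply (not_one_le_zero _)].
        eapply le_trans; [| apply entails_hyp]. unfold rowsum_hyp; from_ctx.
      + apply sum_empty, entails_orr, lam_cols.
    - replace (sub_form succ0 inv) with (rowsum_inv (ren_i shI M) (ren_i shI m)
        (ren_f (uprI (uprI shI)) h) (ren_f shI (row_entry h m)) (IAdd (IVar 0) IOne))
        by (unfold inv, rowsum_inv; ssimpl; reflexivity).
      rewrite ren_rowsum_hyp. apply entails_intro, rowsum_inv_succ.
      + apply entails_weaken. unfold rowsum_hyp; from_ctx.
      + unfold row_entry. replace (ren_f shI (sub_f (inst2 IOne m) h))
          with (sub_f (inst2 IOne (ren_i shI m)) (ren_f (uprI (uprI shI)) h)) by subst_eq.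
        apply eqF_refl.
      + apply entails_hyp. }
  pose proof (entails_inst _ _ M A) as X. unfold inv, rowsum_inv in X. ssimpl_in X.
  eapply entails_mp; [eapply entails_andl; eapply entails_mp; [exact X| apply le_refl]|].
  unfold rowsum_hyp; from_ctx.
Qed.

Lemma rowsum_single H M m h : entails H (Le IOne m) -> entails H (Le m M) ->
  entails H (row_zero_except M m h) -> entails H (EqF (FSum (MLam IOne M h)) (row_entry h m)).
Proof.
  intros A B C. eapply entails_trans; [| apply rowsum_hyp_sum].
  unfold rowsum_hyp; repeat apply entails_and; auto.
Qed.

Lemma fcond_true H q a b : entails H (of_iform q) -> entails H (EqF (FCond q a b) a).
Proof. intro P. eapply entails_mp; [ax| exact P]. Qed.
Lemma fcond_false H q a b : entails H (Not (of_iform q)) -> entails H (EqF (FCond q a b) b).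
Proof. intro P. eapply entails_mp; [ax| exact P]. Qed.

Lemma lam_square H N b : entails H (EqI (IRows (MLam N N b)) (ICols (MLam N N b))).
Proof. eapply eqI_trans; [apply lam_rows| apply eqI_sym, lam_cols]. Qed.

Lemma lam_pow_dims H N b :
  entails H (AllI (And (EqI (IRows (MPow (IVar 0) (ren_m shI (MLam N N b)))) (ren_i shI N))
                       (EqI (ICols (MPow (IVar 0) (ren_m shI (MLam N N b)))) (ren_i shI N)))).
Proof.
  apply entails_ind; [reflexivity| ssimpl |].
  - assert (P0 : entails H (EqM (MPow IZero (MLam N N b)) (MId (IRows (MLam N N b)))))
      by (apply pow_zero, lam_square).
    apply entails_and.
    + eapply eqI_trans; [apply eqI_IRows, P0| eapply eqI_trans; apply lam_rows].
    + eapply eqI_trans; [apply eqI_ICols, P0| eapply eqI_trans; [apply lam_cols| apply lam_rows]].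
  - ssimpl. intro_hyp. set (A := MLam _ _ _).
    assert (P1 : entails (And (ren_form shI H) (And (EqI (IRows (MPow (IVar 0) A)) (ren_i shI N))
                                                (EqI (ICols (MPow (IVar 0) A)) (ren_i shI N))))
                 (EqM (MPow (IAdd (IVar 0) IOne) A) (MMul (MPow (IVar 0) A) A)))
      by (apply pow_succ, lam_square).
    apply entails_and.
    + eapply eqI_trans; [apply eqI_IRows, P1|]. eapply eqI_trans; [apply lam_rows|].
      eapply entails_andl, entails_hyp.
    + eapply eqI_trans; [apply eqI_ICols, P1|]. eapply eqI_trans; [apply lam_cols| apply lam_cols].
Qed.

Lemma lam_pow_rows H N b k : entails H (EqI (IRows (MPow k (MLam N N b))) N).
Proof.
  pose proof (entails_inst _ _ k (lam_pow_dims H N b)) as X. ssimpl_in X.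
  exact (entails_andl _ _ _ X).
Qed.
Lemma lam_pow_cols H N b k : entails H (EqI (ICols (MPow k (MLam N N b))) N).
Proof.
  pose proof (entails_inst _ _ k (lam_pow_dims H N b)) as X. ssimpl_in X.
  exact (entails_andr _ _ _ X).
Qed.

Definition mul_summand (P A : mterm) (K : iterm) : fterm :=
  FMul (FEntry (sh2m P) IOne i2) (FEntry (sh2m A) i2 (sh2i K)).

Arguments mul_summand : simpl never.

Lemma sub_inst2_mul_summand P A K a b :
  sub_f (inst2 a b) (mul_summand P A K) = FMul (FEntry P IOne a) (FEntry A a K).
Proof.
  unfold mul_summand, sh2m, sh2i; simpl. rewrite !sub_inst2_sh2_m, sub_inst2_sh2_i. reflexivity.
Qed.
Lemma ren_mul_summand P A K : ren_f (uprI (uprI shI)) (mul_summand P A K) =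
  mul_summand (ren_m shI P) (ren_m shI A) (ren_i shI K).
Proof. unfold mul_summand, sh2m, sh2i; simpl. f_equal; f_equal; subst_eq. Qed.

Lemma mmul_entry H P A K :
  entails H (Le IOne (IRows P)) -> entails H (Le IOne K) -> entails H (Le K (ICols A)) ->
  entails H (EqF (FEntry (MMul P A) IOne K) (FSum (MLam (ICols P) IOne (mul_summand P A K)))).
Proof.
  intros R1 K1 K2. unfold MMul. eapply eqF_trans; [apply lam_entry; auto; apply le_refl|].
  unfold mul_summand, sh2m, sh2i. ssimpl. apply eqF_refl.
Qed.

Definition col_zero_except (N m : iterm) (A : mterm) (K : iterm) : form :=
  AllI (Imp (And (And (Le IOne (IVar 0)) (Le (IVar 0) (ren_i shI N)))
                 (Not (EqI (IVar 0) (ren_i shI m))))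
            (EqF (FEntry (ren_m shI A) (IVar 0) (ren_i shI K)) FZero)).

Arguments col_zero_except : simpl never.

Definition colsum_hyp (P A : mterm) (K N m : iterm) : form :=
  And (EqI (ICols P) N) (And (Le IOne m) (And (Le m N) (col_zero_except N m A K))).

Lemma col_zero_except_entry H N m A K a : entails H (col_zero_except N m A K) ->
  entails H (Le IOne a) -> entails H (Le a N) -> entails H (Not (EqI a m)) ->
  entails H (EqF (FEntry A a K) FZero).
Proof.
  intros Z A1 A2 A3. pose proof (entails_inst H _ a Z) as X. unfold col_zero_except in X.
  ssimpl_in X. eapply entails_mp; [exact X| repeat apply entails_and; auto].
Qed.

Lemma ren_colsum_hyp P A K N m : ren_form shI (colsum_hyp P A K N m) =
  colsum_hyp (ren_m shI P) (ren_m shI A) (ren_i shI K) (ren_i shI N) (ren_i shI m).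
Proof.
  unfold colsum_hyp, col_zero_except; cbn.
  assert (E : forall u, ren_i (uprI shI) (ren_i shI u) = ren_i shI (ren_i shI u))
    by (intro; subst_eq).
  assert (EA : ren_m (uprI shI) (ren_m shI A) = ren_m shI (ren_m shI A)) by subst_eq.
  rewrite !E, EA. reflexivity.
Qed.

Lemma mul_column_entry H P A K N a : entails H (EqI (ICols P) N) ->
  entails H (Le IOne a) -> entails H (Le a N) ->
  entails H (EqF (FEntry (MLam (ICols P) IOne (mul_summand P A K)) a IOne)
                 (FMul (FEntry P IOne a) (FEntry A a K))).
Proof.
  intros HN A1 A2. rewrite <- sub_inst2_mul_summand with (b := IOne).
  apply lam_entry; [exact A1| | apply le_refl| apply le_refl].
  eapply le_congr; [apply eqI_refl| apply eqI_sym, HN| exact A2].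
Qed.

Lemma sub_row1_transpose V :
  sub_f sub_row1 (FEntry (sh2m V) j2 i2) = FEntry (ren_m shI V) (IVar 0) IOne.
Proof. unfold sh2m; simpl. f_equal. subst_eq. Qed.

Lemma colsum_row_zero P A K N m :
  entails (colsum_hyp P A K N m)
    (row_zero_except N m (FEntry (sh2m (MLam (ICols P) IOne (mul_summand P A K))) j2 i2)).
Proof.
  apply entails_gen, entails_intro.
  rewrite ren_colsum_hyp, sub_row1_transpose; cbn [ren_m ren_i]. rewrite ren_mul_summand.
  generalize (ren_m shI P) (ren_m shI A) (ren_i shI K) (ren_i shI N) (ren_i shI m) (IVar 0).
  clear. intros P A K N m a.
  eapply eqF_trans; [apply mul_column_entry with N; unfold colsum_hyp; from_ctx|].
  eapply eqF_trans;
    [apply eqF_FMul; [apply eqF_refl| apply col_zero_except_entry with N m]| apply fmul0];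
    unfold colsum_hyp; from_ctx.
Qed.

Lemma row_entry_transpose V m : row_entry (FEntry (sh2m V) j2 i2) m = FEntry V m IOne.
Proof. unfold row_entry, sh2m; simpl. rewrite sub_inst2_sh2_m. reflexivity. Qed.

Lemma colsum_hyp_sum P A K N m : entails (colsum_hyp P A K N m)
  (EqF (FSum (MLam (ICols P) IOne (mul_summand P A K))) (FMul (FEntry P IOne m) (FEntry A m K))).
Proof.
  assert (HN : entails (colsum_hyp P A K N m) (EqI (ICols P) N)) by (unfold colsum_hyp; from_ctx).
  eapply eqF_trans; [apply sum_col, lam_cols|]. unfold MTr.
  eapply eqF_trans; [apply eqF_FSum, eqM_MLam; [apply lam_cols|]|].
  { eapply eqI_trans; [apply lam_rows| exact HN]. }
  eapply eqF_trans;
    [apply rowsum_single; [| | apply colsum_row_zero]; unfold colsum_hyp; from_ctx|].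
  rewrite row_entry_transpose.
  apply mul_column_entry with N; [exact HN| ..]; unfold colsum_hyp; from_ctx.
Qed.

(** * Bounded universal quantifiers *)

(* inside a lambda body, puts [i2 - 1] for the bound variable (index variable 0) of [d] *)
Definition sub_pred_row : sub :=
  Sub (fun n => match n with 0 => IMonus (IVar 1) IOne | S k => IVar (S (S k)) end) FVar MVar.

Definition shift_dim (t : iterm) : iterm := IAdd (IAdd t IOne) IOne.

Definition shift_mx (t : iterm) (d : fterm) : mterm :=
  MLam (shift_dim t) (shift_dim t) (FCond (QEq j2 (IAdd i2 IOne)) (sub_f sub_pred_row d) FZero).

Definition prod_entry (t : iterm) (d : fterm) (k : iterm) : fterm :=
  FEntry (MPow k (shift_mx t d)) IOne (IAdd k IOne).

Arguments shift_mx : simpl never.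

Lemma sub_inst2_pred_row a b d :
  sub_f (inst2 a b) (sub_f sub_pred_row d) = sub_f (instI (IMonus a IOne)) d.
Proof. subst_eq. Qed.

Lemma ren_shift_mx t d : ren_m shI (shift_mx t d) = shift_mx (ren_i shI t) (ren_f (uprI shI) d).
Proof. unfold shift_mx; simpl. do 2 f_equal. subst_eq. Qed.

Lemma shift_mx_entry H t d i j :
  entails H (Le IOne i) -> entails H (Le i (shift_dim t)) ->
  entails H (Le IOne j) -> entails H (Le j (shift_dim t)) ->
  entails H (EqF (FEntry (shift_mx t d) i j)
                 (FCond (QEq j (IAdd i IOne)) (sub_f (instI (IMonus i IOne)) d) FZero)).
Proof.
  intros. unfold shift_mx. eapply eqF_trans; [apply lam_entry; eauto|].
  simpl. rewrite sub_inst2_pred_row. apply eqF_refl.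
Qed.

Lemma shift_mx_superdiag H t d k : entails H (Le k t) ->
  entails H (EqF (FEntry (shift_mx t d) (IAdd k IOne) (IAdd (IAdd k IOne) IOne))
                 (sub_f (instI k) d)).
Proof.
  intro B. eapply eqF_trans; [apply shift_mx_entry; try apply le_one_succ|].
  - apply le_succ_r, le_succ_succ, B.
  - apply le_succ_succ, le_succ_succ, B.
  - eapply eqF_trans; [apply fcond_true, eqI_refl| apply eqI_congr_f, succ_monus_one].
Qed.

Lemma shift_mx_col_zero t d k : entails (Le k t)
  (col_zero_except (shift_dim t) (IAdd k IOne) (shift_mx t d) (IAdd (IAdd k IOne) IOne)).
Proof.
  apply entails_gen, entails_intro. rewrite ren_shift_mx; cbn [ren_form ren_i].
  change (ren_i shI (shift_dim t)) with (shift_dim (ren_i shI t)).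
  generalize (ren_i shI t) (ren_f (uprI shI) d) (ren_i shI k) (IVar 0). clear. intros t d k a.
  eapply eqF_trans; [apply shift_mx_entry; try apply le_one_succ; try from_ctx|].
  - apply le_succ_succ, le_succ_succ; from_ctx.
  - apply fcond_false; simpl.
    eapply entails_contrapos; [apply eqI_sym, succ_inj, entails_hyp| from_ctx].
Qed.

Lemma shift_pow_cols H t d k : entails H (EqI (ICols (MPow k (shift_mx t d))) (shift_dim t)).
Proof. apply lam_pow_cols. Qed.

Lemma prod_entry_succ H t d k : entails H (Le k t) ->
  entails H (EqF (prod_entry t d (IAdd k IOne)) (FMul (prod_entry t d k) (sub_f (instI k) d))).
Proof.
  intro B. apply entails_trans with (1 := B).
  assert (Kt : entails (Le k t) (Le (IAdd (IAdd k IOne) IOne) (shift_dim t)))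
    by apply le_succ_succ, le_succ_succ, entails_refl.
  unfold prod_entry at 1.
  eapply eqF_trans;
    [apply eqF_FEntry; [apply pow_succ, lam_square| apply eqI_refl| apply eqI_refl]|].
  eapply eqF_trans; [apply mmul_entry|].
  { eapply le_congr; [apply eqI_refl| apply eqI_sym, lam_pow_rows| apply le_one_succ]. }
  { apply le_one_succ. }
  { eapply le_congr; [apply eqI_refl| apply eqI_sym, lam_cols| exact Kt]. }
  eapply eqF_trans;
    [eapply entails_trans; [| apply (colsum_hyp_sum _ _ _ (shift_dim t) (IAdd k IOne))]|].
  { unfold colsum_hyp. repeat apply entails_and;
      [apply shift_pow_cols| apply le_one_succ| apply le_of_succ_le, Kt| apply shift_mx_col_zero]. }
  apply eqF_FMul; [apply eqF_refl| apply shift_mx_superdiag, entails_refl].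
Qed.

Lemma prod_entry_zero H t d : entails H (EqF (prod_entry t d IZero) FOne).
Proof.
  unfold prod_entry.
  eapply eqF_trans;
    [apply eqF_FEntry; [apply pow_zero, lam_square| apply eqI_refl| apply eqI_refl]|].
  assert (R : entails H (EqI (IRows (shift_mx t d)) (shift_dim t))) by apply lam_rows.
  unfold MId. eapply eqF_trans; [apply lam_entry|].
  { apply le_refl. }
  { eapply le_congr; [apply eqI_refl| apply eqI_sym, R| apply le_one_succ]. }
  { apply le_one_succ. }
  { eapply le_congr; [apply eqI_refl| apply eqI_sym, R| apply le_succ_succ, le0]. }
  apply fcond_true. simpl. apply eqI_sym, iadd0l.
Qed.

Lemma sub_upsI_inst_up_shI s d : sub_f (upsI (instI s)) (ren_f (uprI shI) d) = d.
Proof. rewrite sub_ren_f. transitivity (sub_f sub_id d); [f_equal; up_ext| apply sub_id_terms]. Qed.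
Lemma sub_upsI_succ0_up_shI d : sub_f (upsI succ0) (ren_f (uprI shI) d) = ren_f (uprI shI) d.
Proof. rewrite sub_ren_f, ren_as_sub_f. f_equal. up_ext. Qed.

Lemma sub_pred_row_shI_i u : sub_i sub_pred_row (ren_i shI u) = ren_i shI (ren_i shI u).
Proof. subst_eq. Qed.
Lemma sub_pred_row_shI_f u : sub_f sub_pred_row (ren_f shI u) = ren_f shI (ren_f shI u).
Proof. subst_eq. Qed.
Lemma sub_pred_row_shI_m u : sub_m sub_pred_row (ren_m shI u) = ren_m shI (ren_m shI u).
Proof. subst_eq. Qed.

Lemma sub_pred_row_comm s d :
  sub_f (upsI (upsI s)) (sub_f sub_pred_row d) = sub_f sub_pred_row (sub_f (upsI s) d).
Proof.
  rewrite !sub_sub_f. f_equal. unfold sub_comp. f_equal; apply functional_extensionality.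
  - intros [|n]; simpl; [reflexivity|]. rewrite sub_pred_row_shI_i. reflexivity.
  - intro n; simpl. rewrite sub_pred_row_shI_f. reflexivity.
  - intro n; simpl. rewrite sub_pred_row_shI_m. reflexivity.
Qed.

Lemma sub_prod_entry s t d k :
  sub_f s (prod_entry t d k) = prod_entry (sub_i s t) (sub_f (upsI s) d) (sub_i s k).
Proof. unfold prod_entry, shift_mx, shift_dim; simpl. rewrite sub_pred_row_comm. reflexivity. Qed.

Lemma upsI_sub_of_ren x : upsI (sub_of_ren x) = sub_of_ren (uprI x).
Proof. up_ext. Qed.

Lemma ren_prod_entry t d k :
  ren_f shI (prod_entry t d k) = prod_entry (ren_i shI t) (ren_f (uprI shI) d) (ren_i shI k).
Proof.
  rewrite ren_as_sub_f, sub_prod_entry, upsI_sub_of_ren, <- !ren_as_sub_i, <- ren_as_sub_f.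
  reflexivity.
Qed.

Definition all_one (p : form) (d : fterm) : form := AllI (Imp p (EqF d FOne)).
Definition all_zero (p : form) (d : fterm) : form := AllI (Imp (Not p) (EqF d FZero)).

Lemma all_le_shI_var0 H t p : entails H (ren_form shI (AllLe t p)) ->
  entails H (Le (IVar 0) (ren_i shI t)) -> entails H p.
Proof.
  intros A B. apply (entails_inst _ _ (IVar 0)) in A. ssimpl_in A. eapply entails_mp; eauto.
Qed.
Lemma all_one_shI_var0 H p d : entails H (ren_form shI (all_one p d)) -> entails H p ->
  entails H (EqF d FOne).
Proof.
  intros A B. apply (entails_inst _ _ (IVar 0)) in A. ssimpl_in A. eapply entails_mp; eauto.
Qed.
Lemma all_zero_shI_var0 H p d : entails H (ren_form shI (all_zero p d)) -> entails H (Not p) ->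
  entails H (EqF d FZero).
Proof.
  intros A B. apply (entails_inst _ _ (IVar 0)) in A. ssimpl_in A. eapply entails_mp; eauto.
Qed.

Lemma prod_entry_one t p d :
  entails (And (AllLe t p) (all_one p d)) (EqF (prod_entry t d (IAdd t IOne)) FOne).
Proof.
  set (Hy := And (AllLe t p) (all_one p d)).
  set (inv := Imp (Le (IVar 0) (IAdd (ren_i shI t) IOne))
                  (EqF (prod_entry (ren_i shI t) (ren_f (uprI shI) d) (IVar 0)) FOne)).
  assert (A : entails Hy (AllI inv)).
  { apply entails_ind; [reflexivity| |].
    - unfold inv. cbn [sub_form sub_i sub_f].
      rewrite sub_prod_entry, sub_upsI_inst_up_shI, !sub_instI_shI_i.
      apply entails_intro, prod_entry_zero.
    - replace (sub_form succ0 inv) with (Imp (Le (IAdd (IVar 0) IOne) (IAdd (ren_i shI t) IOne))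
        (EqF (prod_entry (ren_i shI t) (ren_f (uprI shI) d) (IAdd (IVar 0) IOne)) FOne))
        by (unfold inv; cbn [sub_form sub_i sub_f];
            rewrite sub_prod_entry, sub_upsI_succ0_up_shI, sub_succ0_shI_i; reflexivity).
      do 2 intro_hyp. set (C := And (And _ _) _).
      assert (B : entails C (Le (IVar 0) (ren_i shI t))) by apply le_of_succ_le_succ, entails_hyp.
      assert (Pp : entails C p)
        by (apply all_le_shI_var0 with t; [unfold C, Hy; from_ctx| exact B]).
      assert (HG : entails C (ren_form shI (all_one p d))) by (unfold C, Hy; from_ctx).
      assert (IH : entails C inv) by (unfold C; from_ctx).
      clearbody C. unfold inv in IH.
      eapply eqF_trans; [apply prod_entry_succ, B|]. ssimpl.
      eapply eqF_trans; [apply eqF_FMul| apply fmul1].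
      + eapply entails_mp; [exact IH| apply le_succ_r, B].
      + apply all_one_shI_var0 with p; assumption. }
  pose proof (entails_inst _ _ (IAdd t IOne) A) as X. unfold inv in X.
  cbn [sub_form sub_i sub_f] in X.
  rewrite sub_prod_entry, sub_instI_shI_i, sub_upsI_inst_up_shI in X. cbn [sub_i sI instI] in X.
  eapply entails_mp; [exact X| apply le_refl].
Qed.

Lemma ren_sub_instI k d :
  ren_f shI (sub_f (instI k) d) = sub_f (instI (ren_i shI k)) (ren_f (uprI shI) d).
Proof. subst_eq. Qed.

Lemma prod_entry_vanish_succ H t d k nu :
  entails H (Le nu t) -> entails H (Le (IAdd k IOne) (IAdd nu IOne)) ->
  entails H (EqF (sub_f (instI k) d) FZero) ->
  entails H (Imp (Le (IAdd k IOne) nu)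
               (Imp (Le nu (IAdd t IOne)) (EqF (prod_entry t d nu) FZero))) ->
  entails H (EqF (prod_entry t d (IAdd nu IOne)) FZero).
Proof.
  intros B Bk Dk IH. eapply eqF_trans; [apply prod_entry_succ, B|].
  case_on (Le (IAdd k IOne) nu).
  - eapply eqF_trans; [apply eqF_FMul; [|apply eqF_refl]| apply fmul0l].
    eapply entails_mp; [eapply entails_mp; [exact IH| apply entails_hyp]| apply le_succ_r, B].
  - eapply eqF_trans; [apply eqF_FMul; [apply eqF_refl|]| apply fmul0].
    eapply eqF_trans; [apply eqI_congr_f| exact Dk].
    apply le_anti; apply le_of_succ_le_succ; [|exact Bk].
    apply succ_le_of_lt, lt_of_not_le, entails_hyp.
Qed.

Lemma prod_entry_vanish t d k :
  entails (And (Le k t) (EqF (sub_f (instI k) d) FZero)) (EqF (prod_entry t d (IAdd t IOne)) FZero).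
Proof.
  set (Hy := And (Le k t) (EqF (sub_f (instI k) d) FZero)).
  set (inv := Imp (Le (IAdd (ren_i shI k) IOne) (IVar 0))
                (Imp (Le (IVar 0) (IAdd (ren_i shI t) IOne))
                     (EqF (prod_entry (ren_i shI t) (ren_f (uprI shI) d) (IVar 0)) FZero))).
  assert (A : entails Hy (AllI inv)).
  { apply entails_ind; [reflexivity| |].
    - unfold inv. cbn [sub_form sub_i sub_f]. rewrite !sub_instI_shI_i. cbn [sI instI].
      intro_hyp. eapply entails_absurd; [| apply (not_one_le_zero _)].
      eapply le_trans; [apply le_one_succ| apply entails_hyp].
    - replace (sub_form succ0 inv) with (Imp (Le (IAdd (ren_i shI k) IOne) (IAdd (IVar 0) IOne))
        (Imp (Le (IAdd (IVar 0) IOne) (IAdd (ren_i shI t) IOne))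
             (EqF (prod_entry (ren_i shI t) (ren_f (uprI shI) d) (IAdd (IVar 0) IOne)) FZero)))
        by (unfold inv; cbn [sub_form sub_i sub_f];
            rewrite sub_prod_entry, sub_upsI_succ0_up_shI, !sub_succ0_shI_i; reflexivity).
      do 3 intro_hyp. unfold Hy. cbn [ren_form ren_i ren_f]. rewrite ren_sub_instI.
      apply prod_entry_vanish_succ with (ren_i shI k); [| from_ctx| from_ctx| unfold inv; from_ctx].
      apply le_of_succ_le_succ, entails_hyp. }
  pose proof (entails_inst _ _ (IAdd t IOne) A) as X. unfold inv in X.
  cbn [sub_form sub_i sub_f] in X.
  rewrite sub_prod_entry, !sub_instI_shI_i, sub_upsI_inst_up_shI in X. cbn [sub_i sI instI] in X.
  eapply entails_mp; [eapply entails_mp; [exact X|]| apply le_refl].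
  apply le_succ_succ. unfold Hy; from_ctx.
Qed.

Lemma all_le_of_prod_entry_nonzero t p d :
  entails (And (Not (EqF (prod_entry t d (IAdd t IOne)) FZero)) (all_zero p d)) (AllLe t p).
Proof.
  apply entails_gen, entails_intro. cbn [ren_form]. rewrite ren_prod_entry. cbn [ren_i].
  set (C := And (And _ _) _).
  assert (HN : entails C (Not (EqF (prod_entry (ren_i shI t) (ren_f (uprI shI) d)
                                      (IAdd (ren_i shI t) IOne)) FZero))) by (unfold C; from_ctx).
  assert (HL : entails C (Le (IVar 0) (ren_i shI t))) by apply entails_hyp.
  assert (HG : entails C (ren_form shI (all_zero p d))) by (unfold C; from_ctx).
  clearbody C. apply entails_by_contradiction. weaken_hyps.
  eapply entails_absurd; [| exact HN].
  eapply entails_trans; [| apply prod_entry_vanish]. apply entails_and; [exact HL|].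
  ssimpl. apply all_zero_shI_var0 with p; [exact HG| apply entails_hyp].
Qed.

Definition chi_all_le (t : iterm) (d : fterm) : fterm := prod_entry t d (IAdd t IOne).

Lemma characteristic_all_le t p d :
  characteristic p d -> characteristic (AllLe t p) (chi_all_le t d).
Proof.
  intros [G1 G2]. split.
  - eapply entails_trans; [| apply prod_entry_one].
    apply entails_and; [apply entails_refl| apply entails_gen, entails_of_proves, G1].
  - apply entails_by_contradiction. eapply entails_absurd; [| apply entails_weaken, entails_refl].
    eapply entails_trans; [| apply all_le_of_prod_entry_nonzero].
    apply entails_and; [apply entails_hyp| apply entails_gen, entails_of_proves, G2].
Qed.

(** * Matrix equations *)

Definition entries_eq (A B : mterm) : form :=
  AllLe (IRows A) (AllLe (ren_i shI (ICols A))
    (EqF (FEntry (sh2m A) i2 j2) (FEntry (sh2m B) i2 j2))).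
Definition eqM_unfolded (A B : mterm) : form :=
  And (And (EqI (IRows A) (IRows B)) (EqI (ICols A) (ICols B))) (entries_eq A B).
Definition chi_eqM (A B : mterm) : fterm :=
  chi_and (chi_and (chi_eqI (IRows A) (IRows B)) (chi_eqI (ICols A) (ICols B)))
          (chi_all_le (IRows A) (chi_all_le (ren_i shI (ICols A))
             (chi_eqF (FEntry (sh2m A) i2 j2) (FEntry (sh2m B) i2 j2)))).

Lemma entails_eqM_unfolded A B : entails (EqM A B) (eqM_unfolded A B).
Proof.
  assert (E : forall X, sub_form (instM X) (eqM_unfolded (ren_m shM A) (MVar 0)) = eqM_unfolded A X)
    by (intro; unfold eqM_unfolded, entries_eq, AllLe, sh2m; simpl; autorewrite with subst_simpl;
        reflexivity).
  refine (entails_rewriteM _ A B (eqM_unfolded (ren_m shM A) (MVar 0)) _ _ _ _ (entails_refl _) _);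
    [symmetry; apply E.. |].
  unfold eqM_unfolded, entries_eq, AllLe. apply entails_and; [apply entails_and; apply eqI_refl|].
  apply entails_gen, entails_intro, entails_gen, entails_intro. apply eqF_refl.
Qed.

Lemma eqM_unfolded_entails A B : entails (eqM_unfolded A B) (EqM A B).
Proof. eapply entails_mp; [ax| apply entails_refl]. Qed.

Lemma characteristic_eqM A B : characteristic (EqM A B) (chi_eqM A B).
Proof.
  eapply characteristic_equiv; [apply entails_eqM_unfolded| apply eqM_unfolded_entails|].
  apply characteristic_and; [apply characteristic_and; apply characteristic_eqI|].
  apply characteristic_all_le, characteristic_all_le, characteristic_eqF.
Qed.

Definition ren_srt (x : ren) (s : srt) : nat -> nat :=
  match s with SI => rI x | SF => rF x | SM => rM x end.

Lemma ren_srt_shI s n : ren_srt shI s n = bump SI s n.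
Proof. destruct s; reflexivity. Qed.

Ltac split_or := repeat match goal with
  | H : (_ || _) = true |- _ => apply orb_true_iff in H; destruct H
  | H : _ \/ _ |- _ => destruct H end.

Ltac witness k := exists k; split; [simpl; rewrite ?orb_true_iff; tauto| assumption].

Lemma occ_ren_inv_terms :
  (forall u x s n, occ_i s n (ren_i x u) = true ->
     exists k, occ_i s k u = true /\ ren_srt x s k = n) /\
  (forall u x s n, occ_f s n (ren_f x u) = true ->
     exists k, occ_f s k u = true /\ ren_srt x s k = n) /\
  (forall u x s n, occ_m s n (ren_m x u) = true ->
     exists k, occ_m s k u = true /\ ren_srt x s k = n) /\
  (forall u x s n, occ_q s n (ren_q x u) = true ->
     exists k, occ_q s k u = true /\ ren_srt x s k = n).
Proof.
  apply term_mut; intros; simpl in *; try discriminate;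
  try (destruct s; try discriminate; apply Nat.eqb_eq in H; subst;
       exists n; simpl; rewrite Nat.eqb_refl; auto; fail);
  split_or;
  match goal with
  | IH : forall _ _ _, _ -> exists _, _ , H : _ = true |- _ =>
      let k := fresh "k" in destruct (IH _ _ _ H) as (k & ? & ?); witness k
  | _ => idtac
  end.
  destruct s; simpl in H2; destruct (H1 _ _ _ H2) as (k & Hk & Hr); simpl in Hr.
  - destruct k as [|[|k]]; simpl in Hr; try discriminate. inversion Hr; subst.
    exists k; split; [simpl; rewrite !orb_true_iff; auto| reflexivity].
  - exists k; split; [simpl; rewrite !orb_true_iff; auto| exact Hr].
  - exists k; split; [simpl; rewrite !orb_true_iff; auto| exact Hr].
Qed.

Lemma occ_ren_terms :
  (forall u x s k, occ_i s k u = true -> occ_i s (ren_srt x s k) (ren_i x u) = true) /\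
  (forall u x s k, occ_f s k u = true -> occ_f s (ren_srt x s k) (ren_f x u) = true) /\
  (forall u x s k, occ_m s k u = true -> occ_m s (ren_srt x s k) (ren_m x u) = true) /\
  (forall u x s k, occ_q s k u = true -> occ_q s (ren_srt x s k) (ren_q x u) = true).
Proof.
  apply term_mut; intros; simpl in *; try discriminate;
  try (destruct s; try discriminate; apply Nat.eqb_eq in H; subst; simpl; apply Nat.eqb_refl; fail);
  split_or; rewrite ?orb_true_iff;
  repeat match goal with
  | IH : forall _ _ _, ?o _ _ ?u = true -> _, H : ?o _ ?kk ?u = true |- _ =>
      is_var kk; let HH := fresh in pose proof (IH x _ _ H) as HH; clear H
  end; try tauto.
  right. destruct s; simpl in *.
  - specialize (H1 (uprI (uprI x)) SI (S (S k))). auto.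
  - specialize (H1 (uprI (uprI x)) SF k). auto.
  - specialize (H1 (uprI (uprI x)) SM k). auto.
Qed.

Lemma occ_shI_i s n u : occ_i s n u = true -> occ_i s (bump SI s n) (ren_i shI u) = true.
Proof. intro H. rewrite <- ren_srt_shI. apply occ_ren_terms, H. Qed.

Lemma occ_shI_inv_i s n u : occ_i s (bump SI s n) (ren_i shI u) = true -> occ_i s n u = true.
Proof.
  intro H. destruct (proj1 occ_ren_inv_terms _ _ _ _ H) as (k & Hk & Hr).
  rewrite ren_srt_shI in Hr. destruct s; simpl in Hr; inversion Hr; subst; auto.
Qed.
Lemma occ_shI_inv_f s n u : occ_f s (bump SI s n) (ren_f shI u) = true -> occ_f s n u = true.
Proof.
  intro H. destruct (proj1 (proj2 occ_ren_inv_terms) _ _ _ _ H) as (k & Hk & Hr).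
  rewrite ren_srt_shI in Hr. destruct s; simpl in Hr; inversion Hr; subst; auto.
Qed.
Lemma occ_shI_inv_m s n u : occ_m s (bump SI s n) (ren_m shI u) = true -> occ_m s n u = true.
Proof.
  intro H. destruct (proj1 (proj2 (proj2 occ_ren_inv_terms)) _ _ _ _ H) as (k & Hk & Hr).
  rewrite ren_srt_shI in Hr. destruct s; simpl in Hr; inversion Hr; subst; auto.
Qed.

Definition occ_sub_var (sg : sub) (s' : srt) (k : nat) (s : srt) (n : nat) : bool :=
  match s' with
  | SI => occ_i s n (sI sg k)
  | SF => occ_f s n (sF sg k)
  | SM => occ_m s n (sM sg k)
  end.

Lemma occ_sub_inv_terms :
  (forall u sg s n, occ_i s n (sub_i sg u) = true ->
     exists s' k, occ_i s' k u = true /\ occ_sub_var sg s' k s n = true) /\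
  (forall u sg s n, occ_f s n (sub_f sg u) = true ->
     exists s' k, occ_f s' k u = true /\ occ_sub_var sg s' k s n = true) /\
  (forall u sg s n, occ_m s n (sub_m sg u) = true ->
     exists s' k, occ_m s' k u = true /\ occ_sub_var sg s' k s n = true) /\
  (forall u sg s n, occ_q s n (sub_q sg u) = true ->
     exists s' k, occ_q s' k u = true /\ occ_sub_var sg s' k s n = true).
Proof.
  apply term_mut; intros; simpl in *; try discriminate;
  try (solve [exists SI, n; simpl; rewrite Nat.eqb_refl; auto
             | exists SF, n; simpl; rewrite Nat.eqb_refl; auto
             | exists SM, n; simpl; rewrite Nat.eqb_refl; auto]);
  split_or;
  match goal with
  | IH : forall _ _ _, _ -> exists _ _, _ , H : _ = true |- _ =>
      let s' := fresh "s" in let k := fresh "k" in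
      destruct (IH _ _ _ H) as (s' & k & ? & ?); exists s'; witness k
  | _ => idtac
  end.
  destruct (H1 _ _ _ H2) as (s' & k & Hk & Ho).
  destruct s'; simpl in Ho.
  - destruct k as [|[|k]]; [destruct s; discriminate.. |].
    apply occ_shI_inv_i, occ_shI_inv_i in Ho.
    exists SI, k. simpl. rewrite Hk, !orb_true_r. auto.
  - apply occ_shI_inv_f, occ_shI_inv_f in Ho.
    exists SF, k. simpl. rewrite Hk, !orb_true_r. auto.
  - apply occ_shI_inv_m, occ_shI_inv_m in Ho.
    exists SM, k. simpl. rewrite Hk, !orb_true_r. auto.
Qed.

Lemma occ_prod_entry s n t d k : occ_f s n (prod_entry t d k) = true ->
  occ_i s n t = true \/ occ_i s n k = true \/ occ_f s (bump SI s n) d = true.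
Proof.
  unfold prod_entry, shift_mx, shift_dim; simpl. intro H. split_or; auto;
    try (rewrite orb_false_r in H; auto); try (destruct s; simpl in H; discriminate).
  destruct (proj1 (proj2 occ_sub_inv_terms) _ _ _ _ H) as (s' & k0 & Hk & Ho).
  destruct s'; simpl in Ho.
  - destruct k0 as [|k0].
    + destruct s; simpl in Ho; try discriminate; destruct n; discriminate.
    + destruct s; simpl in Ho; try discriminate. apply Nat.eqb_eq in Ho. inversion Ho; subst. auto.
  - destruct s; simpl in Ho; try discriminate. apply Nat.eqb_eq in Ho. subst. auto.
  - destruct s; simpl in Ho; try discriminate. apply Nat.eqb_eq in Ho. subst. auto.
Qed.

Ltac occ_goal := simpl; rewrite ?orb_true_iff; auto 6.

Lemma fv_sub_le a b : fv_sub (chi_le a b) (Le a b).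
Proof. intros s n H. simpl in *. rewrite !orb_false_r in H. exact H. Qed.
Lemma fv_sub_eqI a b : fv_sub (chi_eqI a b) (EqI a b).
Proof. intros s n H. simpl in *. rewrite !orb_false_r in H. exact H. Qed.
Lemma fv_sub_eqF a b : fv_sub (chi_eqF a b) (EqF a b).
Proof. intros s n H. simpl in *. split_or; try discriminate; occ_goal. Qed.
Lemma fv_sub_not p d : fv_sub d p -> fv_sub (chi_not d) (Not p).
Proof. intros F s n H. simpl in *. auto. Qed.
Lemma fv_sub_and p q d e : fv_sub d p -> fv_sub e q -> fv_sub (chi_and d e) (And p q).
Proof. intros F G s n H. simpl in *. split_or; occ_goal. Qed.
Lemma fv_sub_or p q d e : fv_sub d p -> fv_sub e q -> fv_sub (chi_or d e) (Or p q).
Proof. intros F G s n H. simpl in *. split_or; try discriminate; occ_goal. Qed.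
Lemma fv_sub_imp p q d e : fv_sub d p -> fv_sub e q -> fv_sub (chi_imp d e) (Imp p q).
Proof. intros F G s n H. simpl in *. split_or; try discriminate; occ_goal. Qed.

Lemma fv_sub_all_le t p d : fv_sub d p -> fv_sub (chi_all_le t d) (AllLe t p).
Proof.
  intros F s n H. apply occ_prod_entry in H. unfold AllLe. cbn [occ_form]. split_or.
  - rewrite (occ_shI_i _ _ _ H). rewrite orb_true_r. reflexivity.
  - simpl in H. rewrite orb_false_r in H. rewrite (occ_shI_i _ _ _ H), orb_true_r. reflexivity.
  - rewrite (F _ _ H). apply orb_true_r.
Qed.

Lemma occ_eqM_unfolded s n A B :
  occ_form s n (eqM_unfolded A B) = true -> occ_form s n (EqM A B) = true.
Proof.
  unfold eqM_unfolded, entries_eq, AllLe, sh2m. cbn [occ_form occ_i occ_f occ_m]. intro H.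
  split_or; try discriminate; try (destruct s; simpl in H; discriminate);
    repeat first [apply occ_shI_inv_i in H | apply occ_shI_inv_m in H];
    simpl in H; apply orb_true_iff; tauto.
Qed.

Lemma fv_sub_eqM A B : fv_sub (chi_eqM A B) (EqM A B).
Proof.
  intros s n H. apply occ_eqM_unfolded. revert s n H.
  apply fv_sub_and; [apply fv_sub_and; [apply fv_sub_eqI| apply fv_sub_eqI]|].
  apply fv_sub_all_le, fv_sub_all_le, fv_sub_eqF.
Qed.

Lemma characteristic_term_exists phi :
  SigmaB0 phi -> exists d, fv_sub d phi /\ characteristic phi d.
Proof.
  induction 1 as [a b|a b|a b|A B|p _ [d [F G]]|p q _ [d [F G]] _ [e [F' G']]
                 |p q _ [d [F G]] _ [e [F' G']]|p q _ [d [F G]] _ [e [F' G']]|t p _ [d [F G]]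
                 |t p _ [d [F G]]].
  - exists (chi_le a b); split; [apply fv_sub_le| apply characteristic_le].
  - exists (chi_eqI a b); split; [apply fv_sub_eqI| apply characteristic_eqI].
  - exists (chi_eqF a b); split; [apply fv_sub_eqF| apply characteristic_eqF].
  - exists (chi_eqM A B); split; [apply fv_sub_eqM| apply characteristic_eqM].
  - exists (chi_not d); split; [apply fv_sub_not| apply characteristic_not]; assumption.
  - exists (chi_and d e); split; [apply fv_sub_and| apply characteristic_and]; assumption.
  - exists (chi_or d e); split; [apply fv_sub_or| apply characteristic_or]; assumption.
  - exists (chi_imp d e); split; [apply fv_sub_imp| apply characteristic_imp]; assumption.
  - exists (chi_all_le t d); split; [apply fv_sub_all_le| apply characteristic_all_le]; assumption.
  - exists (chi_not (chi_all_le t (chi_not d))); split.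
    + apply fv_sub_not, fv_sub_all_le, fv_sub_not, F.
    + apply characteristic_not, characteristic_all_le, characteristic_not, G.
Qed.

Theorem mainTheorem9 :
  forall phi : form, SigmaB0 phi ->
    exists delta : fterm,
      fv_sub delta phi /\
      LAP_proves (Imp phi (EqF delta FOne)) /\
      LAP_proves (Imp (Not phi) (EqF delta FZero)) /\
      LAP_proves (Iff phi (EqF delta FOne)).
Proof.
  intros phi H. destruct (characteristic_term_exists phi H) as (d & F & G).
  exists d. split; [exact F|]. split; [apply G|]. split; [apply G|]. apply characteristic_iff, G.
Qed.
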